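(* Let $\kappa$ be a regular cardinal. If $X\subseteq\kappa^\kappa$ is $\kappa$-$\Delta^1_1$, then $X$ is $(\kappa,\kappa^{<\kappa})$-Borel$^*$.
   Context: Basic $\kappa$-open sets: $N_\eta=\{\zeta\in\kappa^\kappa\mid\eta\subseteq\zeta\}$ for $\eta:X\to\kappa$, $X\subseteq\kappa$, $|X|<\kappa$, and $\emptyset$; in $\kappa^\kappa\times\kappa^\kappa$ they are products $N_\eta\times N_\xi$. A set is $\kappa$-open if it is a union of at most $\kappa$ basic $\kappa$-open sets, $\kappa$-closed if its complement is $\kappa$-open; $\kappa$-Borel sets form the smallest class containing the basic $\kappa$-open sets closed under complements and unions and intersections of at most $\kappa$ sets. $A\subseteq\kappa^\kappa$ is $\kappa$-$\Sigma^1_1$ if it is the projection onto the first coordinate of a $\kappa$-Borel subset of $\kappa^\kappa\times\kappa^\kappa$, $\kappa$-$\Pi^1_1$ if its complement is $\kappa$-$\Sigma^1_1$, and $\kappa$-$\Delta^1_1$ if both. A good labelled $(\kappa,\lambda)$-tree is a pair $(T,L)$ where $T$ is a (rooted) tree without branches of length $\kappa$, every element has at most $\kappa$ immediate successors, $|T|\le\lambda$, every increasing sequence in $T$ has a supremum in $T$, $L(t)\in\{\bigcup,\bigcap\}$ for non-leaves $t$, and $L(t)$ is a basic $\kappa$-open set for leaves $t$ (the paper also allows $\kappa$-Borel sets as leaf labels). Borel$^*$-game $GB(\xi,(T,L))$: the play starts at the root; at a non-leaf $t$, II chooses an immediate successor if $L(t)=\bigcup$, I chooses if $L(t)=\bigcap$;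 at limits the play moves to the supremum; the play ends at a leaf $t$ and II wins iff $\xi\in L(t)$. $(T,L)$ is a $(\kappa,\lambda)$-Borel$^*$-code if it is a good labelled $(\kappa,\lambda)$-tree and there is $\pi$ with: (i) $\mathrm{dom}(\pi)$ a $\kappa$-closed subset of $\kappa^\kappa$ and each $\pi(\eta)$ a strategy of II; (ii) whenever II has a winning strategy in $GB(\xi,(T,L))$, some $\pi(\eta)$ is one; (iii) $\{(\xi,\eta)\mid\eta\in\mathrm{dom}(\pi),\ \pi(\eta)$ winning for II in $GB(\xi,(T,L))\}$ is $\kappa$-Borel. $X\subseteq\kappa^\kappa$ is $(\kappa,\lambda)$-Borel$^*$ if there is a $(\kappa,\lambda)$-Borel$^*$-code $(T,L)$ with $\xi\in X\iff$ II has a winning strategy in $GB(\xi,(T,L))$, for all $\xi$. *)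

Set Implicit Arguments.

Definition injective {A B : Type} (f : A -> B) : Prop :=
  forall x y, f x = f y -> x = y.
Definition card_le (A B : Type) : Prop := exists f : A -> B, injective f.
Definition card_lt (A B : Type) : Prop := card_le A B /\ ~ card_le B A.

(** kappa is represented by a type K with a strict well-order lt (the
    ordinals below kappa).  It is a regular (infinite) cardinal. *)
Definition regular_cardinal (K : Type) (lt : K -> K -> Prop) : Prop :=
  well_founded lt /\
  (forall a b c, lt a b -> lt b c -> lt a c) /\
  (forall a b, lt a b \/ a = b \/ lt b a) /\
  (* initial ordinal: no injection of kappa into a proper initial segment *)
  (forall a : K, ~ card_le K {b : K | lt b a}) /\
  (exists f : nat -> K, injective f) /\
  (forall S : K -> Prop, card_lt {x : K | S x} K -> exists b, forall x, S x -> lt x b).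

Section GDST.
Context {K : Type} (lt : K -> K -> Prop).

Definition Baire : Type := K -> K.

(** kappa^{<kappa} = the set of functions from some alpha < kappa to kappa *)
Definition KltK : Type := {a : K & {b : K | lt b a} -> K}.

(** Basic kappa-open sets N_eta (|dom eta| < kappa), and the empty set. *)
Definition basic1 (U : Baire -> Prop) : Prop :=
  (forall z, ~ U z) \/
  exists (X : K -> Prop) (eta : {x : K | X x} -> K),
    card_lt {x : K | X x} K /\
    forall z : Baire, U z <-> (forall x : {x : K | X x}, z (proj1_sig x) = eta x).

Definition basic2 (W : Baire * Baire -> Prop) : Prop :=
  exists U V, basic1 U /\ basic1 V /\ forall p, W p <-> (U (fst p) /\ V (snd p)).

Inductive kBorel {S : Type} (basic : (S -> Prop) -> Prop) : (S -> Prop) -> Prop :=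
| kB_basic U : basic U -> kBorel basic U
| kB_compl U : kBorel basic U -> kBorel basic (fun x => ~ U x)
| kB_union (I : Type) (F : I -> S -> Prop) :
    card_le I K -> (forall i, kBorel basic (F i)) ->
    kBorel basic (fun x => exists i, F i x)
| kB_inter (I : Type) (F : I -> S -> Prop) :
    card_le I K -> (forall i, kBorel basic (F i)) ->
    kBorel basic (fun x => forall i, F i x)
| kB_ext U V : kBorel basic U -> (forall x, U x <-> V x) -> kBorel basic V.

Definition kopen1 (U : Baire -> Prop) : Prop :=
  exists (I : Type) (F : I -> Baire -> Prop),
    card_le I K /\ (forall i, basic1 (F i)) /\
    forall z, U z <-> exists i, F i z.
Definition kclosed1 (C : Baire -> Prop) : Prop := kopen1 (fun z => ~ C z).

Definition Sigma11 (A : Baire -> Prop) : Prop :=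
  exists B : Baire * Baire -> Prop,
    kBorel basic2 B /\ forall x, A x <-> exists y, B (x, y).
Definition Pi11 (A : Baire -> Prop) : Prop := Sigma11 (fun x => ~ A x).
Definition Delta11 (A : Baire -> Prop) : Prop := Sigma11 A /\ Pi11 A.

Inductive label : Type :=
| LUnion : label
| LInter : label
| LLeaf : (Baire -> Prop) -> label.

Section Tree.
Context {N : Type} (tlt : N -> N -> Prop) (root : N) (L : N -> label).

Definition tle (s t : N) : Prop := s = t \/ tlt s t.
Definition leaf (t : N) : Prop := ~ exists s, tlt t s.
Definition imm_succ (t s : N) : Prop := tlt t s /\ ~ exists u, tlt t u /\ tlt u s.

(** good labelled (kappa,lambda)-tree, lambda given as a type Lam *)
Definition good_tree (Lam : Type) : Prop :=
  (forall t, ~ tlt t t) /\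
  (forall a b c, tlt a b -> tlt b c -> tlt a c) /\
  (forall t, tle root t) /\
  (forall t a b, tlt a t -> tlt b t -> tlt a b \/ a = b \/ tlt b a) /\
  well_founded tlt /\
  (~ exists f : K -> N, forall a b, lt a b -> tlt (f a) (f b)) /\
  (forall t, card_le {s : N | imm_succ t s} K) /\
  card_le N Lam /\
  (forall (a : K) (f : {b : K | lt b a} -> N),
      (forall x y, lt (proj1_sig x) (proj1_sig y) -> tlt (f x) (f y)) ->
      exists s, (forall x, tle (f x) s) /\
                (forall u, (forall x, tle (f x) u) -> tle s u)) /\
  (forall t, ~ leaf t -> L t = LUnion \/ L t = LInter) /\
  (forall t, leaf t -> exists U, L t = LLeaf U /\ basic1 U).

(** Positions of the game are
    nodes of T (the history of a play is determined by the current node),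
    so a strategy of II assigns to each node labelled Union an immediate
    successor. *)
Definition strategyII (sigma : N -> N) : Prop :=
  forall t, L t = LUnion -> imm_succ t (sigma t).

Definition consistent (sigma : N -> N) (t : N) : Prop :=
  forall s, tlt s t -> L s = LUnion -> tle (sigma s) t.

Definition leaf_holds (xi : Baire) (l : label) : Prop :=
  match l with LLeaf U => U xi | _ => False end.

Definition winningII (xi : Baire) (sigma : N -> N) : Prop :=
  strategyII sigma /\
  forall t, leaf t -> consistent sigma t -> leaf_holds xi (L t).

Definition II_wins (xi : Baire) : Prop := exists sigma, winningII xi sigma.

Definition borel_star_code (Lam : Type) : Prop :=
  good_tree Lam /\
  exists (D : Baire -> Prop) (pi : Baire -> N -> N),
    kclosed1 D /\
    (forall eta, D eta -> strategyII (pi eta)) /\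
    (forall xi, II_wins xi -> exists eta, D eta /\ winningII xi (pi eta)) /\
    kBorel basic2 (fun p => D (snd p) /\ winningII (fst p) (pi (snd p))).

End Tree.

Definition borel_star (Lam : Type) (X : Baire -> Prop) : Prop :=
  exists (N : Type) (tlt : N -> N -> Prop) (root : N) (L : N -> label),
    borel_star_code tlt root L Lam /\
    forall xi, X xi <-> II_wins tlt L xi.

End GDST.

(* Every kappa-Borel subset of the plane is the projection of a closed subset of the cube
   (kappa^kappa)^3: by induction, merging at most kappa witnesses into one through a pairing
   function on kappa. So X and its complement are projections of closed sets C1 and C2.
   Consider the game in which, stage by stage, II builds a point (a, b, c) meant to lie in C1
   and I builds (b', c') meant to keep (a, b', c') in C2. As C1 and C2 are closed with disjoint
   projections, no play lasts kappa stages; once I drops out of C2, I challenges a coordinate g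
   and II must match xi g with its own a g. Hence II wins iff xi is in X, and a winning
   strategy is read off a witness in C1. The positions form the Borel*-tree: they are
   sequences of length < kappa, hence at most kappa^{<kappa} many, and the strategies coded by
   the closed set of points of C1 witness the definability conditions of a Borel*-code. *)

From Stdlib Require Import Classical ClassicalEpsilon FunctionalExtensionality
  PropExtensionality ProofIrrelevance Wellfounded Lia.

Lemma proj1_sig_inj (A : Type) (P : A -> Prop) (x y : sig P) :
  proj1_sig x = proj1_sig y -> x = y.
Proof. apply eq_sig_hprop; intros; apply proof_irrelevance. Qed.

Lemma exists_max_rank (A : Type) (P : A -> Prop) (f : A -> nat) (N : nat) :
  (exists x, P x) -> (forall x, P x -> f x <= N) ->
  exists x, P x /\ forall y, P y -> f y <= f x.
Proof.
  induction N as [|N IH]; intros Hne Hbnd.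
  - destruct Hne as [x Px]; exists x; split; auto.
    intros y Py; specialize (Hbnd y Py); lia.
  - destruct (classic (exists x, P x /\ f x = S N)) as [(x & Px & Ex)|Hn].
    + exists x; split; auto; intros y Py; rewrite Ex; auto.
    + apply IH; auto. intros x Px.
      assert (f x <> S N) by (intros E; apply Hn; eauto).
      specialize (Hbnd x Px); lia.
Qed.

(** * Arithmetic of a regular cardinal *)

Section Kappa.
Context {K : Type} {lt : K -> K -> Prop} (Hreg : regular_cardinal lt).

Lemma lt_wf : well_founded lt.
Proof. destruct Hreg as (? & ? & ? & ? & ? & ?); auto. Qed.
Lemma lt_trans a b c : lt a b -> lt b c -> lt a c.
Proof. destruct Hreg as (? & ? & ? & ? & ? & ?); eauto. Qed.
Lemma lt_total a b : lt a b \/ a = b \/ lt b a.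
Proof. destruct Hreg as (? & ? & ? & ? & ? & ?); eauto. Qed.
Lemma no_inj_K_below a : ~ card_le K {b | lt b a}.
Proof. destruct Hreg as (? & ? & ? & ? & ? & ?); eauto. Qed.
Lemma K_infinite : exists f : nat -> K, injective f.
Proof. destruct Hreg as (? & ? & ? & ? & ? & ?); eauto. Qed.

Definition bounded (S : K -> Prop) : Prop := exists b, forall x, S x -> lt x b.

Lemma bounded_of_card_lt (S : K -> Prop) : card_lt {x | S x} K -> bounded S.
Proof. unfold bounded; destruct Hreg as (? & ? & ? & ? & ? & ?); eauto. Qed.

Lemma lt_irrefl a : ~ lt a a.
Proof. induction a as [a IH] using (well_founded_ind lt_wf); intros H; exact (IH a H H). Qed.
Lemma lt_asym a b : lt a b -> lt b a -> False.
Proof. intros H1 H2; exact (lt_irrefl _ (lt_trans _ _ _ H1 H2)). Qed.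

Definition natK : nat -> K :=
  proj1_sig (constructive_indefinite_description _ K_infinite).
Lemma natK_inj : injective natK.
Proof. exact (proj2_sig (constructive_indefinite_description _ K_infinite)). Qed.
Lemma natK_neq i j : i <> j -> natK i <> natK j.
Proof. intros H E; apply H, natK_inj, E. Qed.

Definition k0 : K := natK 0.
Lemma K_inhabited : inhabited K. Proof. exact (inhabits k0). Qed.

Definition le x y := lt x y \/ x = y.
Lemma le_lt_trans a b c : le a b -> lt b c -> lt a c.
Proof. intros [H|<-] H'; eauto using lt_trans. Qed.
Lemma lt_le_trans a b c : lt a b -> le b c -> lt a c.
Proof. intros H [H'|<-]; eauto using lt_trans. Qed.
Lemma le_trans a b c : le a b -> le b c -> le a c.
Proof. intros [H|<-] [H'|<-]; unfold le; eauto using lt_trans. Qed.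
Lemma not_lt_le a b : ~ lt a b -> le b a.
Proof. intros H; destruct (lt_total a b) as [?|[<-|?]]; unfold le; tauto. Qed.
Lemma le_not_lt a b : le a b -> ~ lt b a.
Proof. intros [H|<-] H'; [exact (lt_asym _ _ H H')|exact (lt_irrefl _ H')]. Qed.

Lemma least_elem (P : K -> Prop) :
  (exists x, P x) -> exists x, P x /\ forall y, P y -> le x y.
Proof.
  intros [x Px]. apply NNPP; intros Hn. revert Px.
  induction x as [x IH] using (well_founded_ind lt_wf). intros Px.
  apply Hn. exists x; split; auto. intros y Py.
  apply not_lt_le. intros Hyx. exact (IH y Hyx Py).
Qed.

Lemma bounded_of_inj (A : Type) (S : K -> Prop) (g : {x | S x} -> A) :
  injective g -> ~ card_le K A -> bounded S.
Proof.
  intros ginj nA. apply bounded_of_card_lt. split.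
  - exists (@proj1_sig _ _); intros x y; apply proj1_sig_inj.
  - intros [h hinj]. apply nA. exists (fun k => g (h k)). intros x y E; auto.
Qed.

Lemma bounded_no_inj_K S : bounded S -> ~ card_le K {x | S x}.
Proof.
  intros [b Hb] [h hinj]. apply (no_inj_K_below b).
  exists (fun k => exist (fun c => lt c b) (proj1_sig (h k)) (Hb _ (proj2_sig (h k)))).
  intros x y E. apply hinj, proj1_sig_inj. exact (f_equal (@proj1_sig _ _) E).
Qed.

Lemma bounded_union S T : bounded S -> bounded T -> bounded (fun x => S x \/ T x).
Proof.
  intros [a Ha] [b Hb]. destruct (lt_total a b) as [H|[<-|H]].
  - exists b; intros x [Hx|Hx]; eauto using lt_trans.
  - exists a; intros x [Hx|Hx]; eauto.
  - exists a; intros x [Hx|Hx]; eauto using lt_trans.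
Qed.

(* By regularity each fibre [{k | fst (F k) = c}] is bounded, and so is the set of the
   fewer than kappa fibre bounds; its bound [B] then lies below the bound of its own fibre,
   which is below [B]. *)
Lemma no_inj_K_square a : ~ card_le K ({b | lt b a} * {b | lt b a}).
Proof.
  intros [F Finj].
  assert (Hfibre : forall c, bounded (fun k => fst (F k) = c)).
  { intros c.
    apply (bounded_of_inj _ _ (fun k : {k | fst (F k) = c} => snd (F (proj1_sig k)))).
    - intros [k1 h1] [k2 h2] E; simpl in *. apply proj1_sig_inj, Finj; simpl.
      rewrite (surjective_pairing (F k1)), (surjective_pairing (F k2)). congruence.
    - apply no_inj_K_below. }
  destruct (choice _ Hfibre) as [bnd Hbnd].
  assert (Hbnds : bounded (fun k => exists c, k = bnd c)).
  { apply (bounded_of_inj _ _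
      (fun k : {k | exists c, k = bnd c} =>
         proj1_sig (constructive_indefinite_description _ (proj2_sig k)))).
    - intros [k1 h1] [k2 h2] E; simpl in *. apply proj1_sig_inj; simpl.
      destruct (constructive_indefinite_description _ h1) as [c1 ->].
      destruct (constructive_indefinite_description _ h2) as [c2 ->].
      simpl in E; congruence.
    - apply no_inj_K_below. }
  destruct Hbnds as [B HB].
  apply (lt_asym B (bnd (fst (F B)))); [apply Hbnd; reflexivity|apply HB; eauto].
Qed.

Lemma exists_gt a : exists b, lt a b.
Proof.
  assert (H : bounded (fun x => x = a)).
  { apply (bounded_of_inj unit _ (fun _ => tt)).
    - intros [x hx] [y hy] _; apply proj1_sig_inj; simpl; congruence.
    - intros [h hinj]. apply (natK_neq 0 1); auto.
      apply hinj; destruct (h (natK 0)), (h (natK 1)); auto. }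
  destruct H as [b Hb]; exists b; auto.
Qed.

Lemma bounded_singleton a : bounded (fun x => x = a).
Proof. destruct (exists_gt a) as [b Hb]; exists b; intros x ->; auto. Qed.

Lemma exists_gt3 x y z : exists q, lt x q /\ lt y q /\ lt z q.
Proof.
  destruct (bounded_union _ _ (bounded_union _ _ (bounded_singleton x) (bounded_singleton y))
              (bounded_singleton z)) as [q Hq].
  exists q; split; [|split]; apply Hq; auto.
Qed.

Definition succK (p : K) : K :=
  proj1_sig (constructive_indefinite_description _ (least_elem _ (exists_gt p))).
Lemma succK_spec p : lt p (succK p) /\ forall b, lt p b -> le (succK p) b.
Proof.
  exact (proj2_sig (constructive_indefinite_description _ (least_elem _ (exists_gt p)))).
Qed.
Lemma lt_succK x p : lt x (succK p) <-> le x p.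
Proof.
  destruct (succK_spec p) as [Hp Hleast]. split.
  - intros Hx. apply not_lt_le. intros Hpx. exact (le_not_lt _ _ (Hleast x Hpx) Hx).
  - intros Hx; eapply le_lt_trans; eauto.
Qed.

Definition max2 (p : K * K) : K :=
  if excluded_middle_informative (lt (fst p) (snd p)) then snd p else fst p.
Lemma le_max2_fst p : le (fst p) (max2 p).
Proof. unfold max2; destruct (excluded_middle_informative _); unfold le; auto. Qed.
Lemma le_max2_snd p : le (snd p) (max2 p).
Proof.
  unfold max2; destruct (excluded_middle_informative _); [right; auto|now apply not_lt_le].
Qed.

Definition godel_lt (q p : K * K) : Prop :=
  lt (max2 q) (max2 p) \/
  (max2 q = max2 p /\ (lt (fst q) (fst p) \/ (fst q = fst p /\ lt (snd q) (snd p)))).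

Lemma godel_lt_wf : well_founded godel_lt.
Proof.
  enough (H : forall m p, max2 p = m -> Acc godel_lt p) by (intros p; eauto).
  intros m; induction m as [m IHm] using (well_founded_ind lt_wf).
  intros [a b]. revert b. induction a as [a IHa] using (well_founded_ind lt_wf).
  intros b. induction b as [b IHb] using (well_founded_ind lt_wf).
  intros E. constructor. intros [c d] Hq. unfold godel_lt in Hq; simpl in Hq.
  destruct Hq as [H|[H [H'|[<- H']]]].
  - apply (IHm (max2 (c, d))); auto. rewrite <- E; auto.
  - apply IHa; congruence.
  - apply IHb; congruence.
Qed.

Lemma godel_lt_total p q : p <> q -> godel_lt p q \/ godel_lt q p.
Proof.
  intros Hne. unfold godel_lt.
  destruct (lt_total (max2 p) (max2 q)) as [H|[H|H]]; [tauto| |tauto].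
  destruct (lt_total (fst p) (fst q)) as [H'|[H'|H']]; [tauto| |right; right; auto].
  destruct (lt_total (snd p) (snd q)) as [H''|[H''|H'']]; [tauto| |right; right; auto].
  exfalso; apply Hne; destruct p, q; simpl in *; congruence.
Qed.

Definition pairing_step (p : K * K) (rec : forall q, godel_lt q p -> K) : K :=
  epsilon K_inhabited (fun k => forall q (Hq : godel_lt q p), rec q Hq <> k).

Definition pairing : K * K -> K := Fix godel_lt_wf (fun _ => K) pairing_step.

Lemma pairing_unfold p : pairing p = pairing_step p (fun q _ => pairing q).
Proof.
  unfold pairing. refine (Fix_eq godel_lt_wf (fun _ => K) pairing_step _ p).
  intros x f g Hfg. unfold pairing_step. f_equal.
  apply functional_extensionality; intro k. apply propositional_extensionality.
  split; intros H q Hq; [rewrite <- Hfg|rewrite Hfg]; auto.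
Qed.

(* A fresh value exists because the predecessors of [p] all lie in [b * b] for any
   [b > max2 p], and by [no_inj_K_square] they cannot exhaust [K]. *)
Lemma pairing_fresh p q : godel_lt q p -> pairing q <> pairing p.
Proof.
  revert q. rewrite (pairing_unfold p). unfold pairing_step.
  apply (epsilon_spec K_inhabited (fun k => forall q (Hq : godel_lt q p), pairing q <> k)).
  apply NNPP; intros Hn.
  assert (Hall : forall k, exists q, godel_lt q p /\ pairing q = k).
  { intros k. apply NNPP; intros Hk. apply Hn. exists k. intros q Hq E. apply Hk; eauto. }
  destruct (choice _ Hall) as [ch Hch].
  destruct (exists_gt (max2 p)) as [b Hb].
  assert (Hmax : forall k, le (max2 (ch k)) (max2 p)).
  { intros k. destruct (Hch k) as [[H|[H _]] _]; unfold le; auto. }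
  assert (B1 : forall k, lt (fst (ch k)) b).
  { intros k. eapply le_lt_trans; [eapply le_trans; [apply le_max2_fst|apply Hmax]|exact Hb]. }
  assert (B2 : forall k, lt (snd (ch k)) b).
  { intros k. eapply le_lt_trans; [eapply le_trans; [apply le_max2_snd|apply Hmax]|exact Hb]. }
  apply (no_inj_K_square b).
  exists (fun k => (exist (fun c => lt c b) (fst (ch k)) (B1 k),
                    exist (fun c => lt c b) (snd (ch k)) (B2 k))).
  intros k1 k2 E. injection E; intros E2 E1.
  rewrite <- (proj2 (Hch k1)), <- (proj2 (Hch k2)), (surjective_pairing (ch k1)),
    (surjective_pairing (ch k2)).
  congruence.
Qed.

Definition pairK (a b : K) : K := pairing (a, b).

Lemma pairK_inj a b c d : pairK a b = pairK c d -> a = c /\ b = d.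
Proof.
  intros E. destruct (classic ((a, b) = (c, d))) as [H|H].
  - injection H; auto.
  - exfalso. destruct (godel_lt_total _ _ H) as [G|G].
    + exact (pairing_fresh _ _ G E).
    + exact (pairing_fresh _ _ G (eq_sym E)).
Qed.

Lemma pairK_inj_r k : injective (pairK k).
Proof. intros x y E; apply pairK_inj in E; tauto. Qed.

Lemma card_le_refl : card_le K K.
Proof. exists (fun x => x); intros x y; auto. Qed.

Lemma card_le_bool : card_le bool K.
Proof.
  exists (fun b : bool => if b then natK 0 else natK 1).
  intros [|] [|] E; auto; exfalso; exact (natK_neq 0 1 ltac:(lia) ltac:(congruence)).
Qed.

End Kappa.

Arguments bounded {K} lt S.
Arguments le {K} lt x y.

(** * Basic open sets and projections of closed sets *)

Section Basic.
Context {K : Type} {lt : K -> K -> Prop} (Hreg : regular_cardinal lt).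

Notation bounded := (bounded lt).
Notation Baire := (@Baire K).
Notation k0 := (k0 Hreg).
Notation pairK := (pairK Hreg).
Notation natK := (natK Hreg).

Lemma card_lt_of_bounded (X : K -> Prop) : bounded X -> card_lt {x | X x} K.
Proof.
  intros H; split.
  - exists (@proj1_sig _ _); intros x y; apply proj1_sig_inj.
  - exact (bounded_no_inj_K Hreg _ H).
Qed.

Lemma basic1_ext (U V : Baire -> Prop) : basic1 U -> (forall z, U z <-> V z) -> basic1 V.
Proof.
  intros [H|(X & eta & H1 & H2)] E; [left; intros z Hz; apply (H z), E, Hz|].
  right; exists X, eta; split; auto. intros z; rewrite <- E; auto.
Qed.

Lemma basic1_agree (X : K -> Prop) (e : K -> K) :
  bounded X -> basic1 (fun z : Baire => forall x, X x -> z x = e x).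
Proof.
  intros HX; right; exists X, (fun x => e (proj1_sig x)).
  split; [apply card_lt_of_bounded; auto|].
  intros z; split; intros H; [intros [x hx]; apply H; auto|intros x hx; apply (H (exist _ x hx))].
Qed.

Lemma basic1_empty : basic1 (fun _ : Baire => False).
Proof. left; auto. Qed.

Lemma basic1_full : basic1 (fun _ : Baire => True).
Proof.
  eapply basic1_ext; [apply (basic1_agree (fun _ => False) (fun x => x))|].
  - exists k0; intros _ [].
  - intros z; split; auto. intros _ _ [].
Qed.

Lemma basic1_point a v : basic1 (fun z : Baire => z a = v).
Proof.
  eapply basic1_ext;
    [apply (basic1_agree (fun x => x = a) (fun _ => v) (bounded_singleton Hreg a))|].
  intros z; split; intros H; [apply H; auto|intros x ->; auto].
Qed.

Lemma basic1_cases (U : Baire -> Prop) : basic1 U ->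
  (forall z, ~ U z) \/
  exists X e, bounded X /\ forall z, U z <-> (forall x, X x -> z x = e x).
Proof.
  intros [H|(X & eta & H1 & H2)]; [left; auto|right].
  exists X, (fun x => match excluded_middle_informative (X x) with
                      | left h => eta (exist _ x h) | right _ => x end).
  split; [apply (bounded_of_card_lt Hreg); auto|].
  intros z; rewrite H2; split; intros H x.
  - intros hx; destruct (excluded_middle_informative (X x)) as [h|h]; [|tauto].
    exact (H (exist _ x h)).
  - destruct x as [x hx]; simpl. rewrite (H x hx).
    destruct (excluded_middle_informative (X x)) as [h|h]; [|tauto].
    f_equal; apply proj1_sig_inj; auto.
Qed.

Lemma basic1_local (U : Baire -> Prop) : basic1 U ->
  (forall z, ~ U z) \/
  exists b, forall z z', (forall x, lt x b -> z x = z' x) -> U z -> U z'.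
Proof.
  intros HU; destruct (basic1_cases _ HU) as [H|(X & e & [b Hb] & H)]; [left; auto|right].
  exists b; intros z z' E Hz. rewrite H in *. intros x hx. rewrite <- E; auto.
Qed.

Lemma basic1_inter (U V : Baire -> Prop) :
  basic1 U -> basic1 V -> basic1 (fun z => U z /\ V z).
Proof.
  intros HU HV.
  destruct (basic1_cases _ HU) as [H|(X & e & HX & H)]; [left; intros z [Hz _]; eapply H; eauto|].
  destruct (basic1_cases _ HV) as [H'|(X' & e' & HX' & H')];
    [left; intros z [_ Hz]; eapply H'; eauto|].
  destruct (classic (exists x, X x /\ X' x /\ e x <> e' x)) as [(x & h1 & h2 & h3)|Hc].
  - left. intros z [Hz Hz']. rewrite H in Hz; rewrite H' in Hz'.
    apply h3. rewrite <- Hz, <- Hz'; auto.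
  - eapply basic1_ext; [apply (basic1_agree (fun x => X x \/ X' x)
       (fun x => if excluded_middle_informative (X x) then e x else e' x)
       (bounded_union Hreg _ _ HX HX'))|].
    intros z; rewrite H, H'. split.
    + intros Hz; split; intros x hx.
      * specialize (Hz x (or_introl hx)). destruct (excluded_middle_informative (X x)); tauto.
      * specialize (Hz x (or_intror hx)).
        destruct (excluded_middle_informative (X x)); auto.
        rewrite Hz. apply NNPP; intros n; apply Hc; eauto.
    + intros [Hz Hz'] x hx; destruct (excluded_middle_informative (X x)); [apply Hz|apply Hz'];
        tauto.
Qed.

Lemma basic1_reindex (h : K -> K) (U : Baire -> Prop) : injective h -> basic1 U ->
  basic1 (fun z => U (fun x => z (h x))).
Proof.
  intros hinj HU. destruct (basic1_cases _ HU) as [H|(X & e & HX & H)]; [left; intros z; apply H|].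
  set (hinv := fun y => epsilon (K_inhabited Hreg) (fun x => h x = y)).
  assert (Hinv : forall x, hinv (h x) = x).
  { intros x; apply hinj.
    apply (epsilon_spec (K_inhabited Hreg) (fun x' => h x' = h x)); eauto. }
  assert (Himg : bounded (fun y => exists x, X x /\ y = h x)).
  { assert (L : forall y, (exists x, X x /\ y = h x) -> X (hinv y))
      by (intros y [x [hx ->]]; rewrite Hinv; auto).
    apply (bounded_of_inj Hreg {x | X x} _
       (fun y => exist X (hinv (proj1_sig y)) (L (proj1_sig y) (proj2_sig y)))).
    - intros [y1 [x1 [h1 ->]]] [y2 [x2 [h2 ->]]] E. apply proj1_sig_inj; simpl in *.
      apply (f_equal (@proj1_sig _ _)) in E; simpl in E. rewrite !Hinv in E. congruence.
    - apply (bounded_no_inj_K Hreg); auto. }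
  eapply basic1_ext; [apply (basic1_agree _ (fun y => e (hinv y)) Himg)|].
  intros z; rewrite H; split.
  - intros Hz x hx. specialize (Hz (h x) (ex_intro _ x (conj hx eq_refl))).
    rewrite Hinv in Hz; auto.
  - intros Hz y [x [hx ->]]. rewrite Hinv; auto.
Qed.

(* Outside [{z | forall x in X, z x = e x}] a point disagrees with [e] at some [x] with
   some value [v], and [pairK x v] enumerates these possibilities. *)
Lemma basic1_compl (U : Baire -> Prop) : basic1 U ->
  exists F : K -> (Baire -> Prop),
    (forall k, basic1 (F k)) /\ forall z, ~ U z <-> exists k, F k z.
Proof.
  intros HU. destruct (basic1_cases _ HU) as [H|(X & e & HX & H)].
  - exists (fun _ _ => True); split; [intros; apply basic1_full|].
    intros z; split; [exists k0; auto|intros _; apply H].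
  - exists (fun k z => exists x v, k = pairK x v /\ X x /\ v <> e x /\ z x = v). split.
    + intros k. destruct (classic (exists x v, k = pairK x v /\ X x /\ v <> e x))
        as [(x & v & -> & h1 & h2)|Hc].
      * eapply basic1_ext; [apply (basic1_point x v)|]. intros z; split.
        -- intros Hz; exists x, v; auto.
        -- intros (x' & v' & E & _ & _ & Hz). apply (pairK_inj Hreg) in E.
           destruct E; subst; auto.
      * eapply basic1_ext; [apply basic1_empty|]. intros z; split; [intros []|].
        intros (x & v & E & h1 & h2 & h3); apply Hc; eauto.
    + intros z; rewrite H; split.
      * intros Hz. apply NNPP; intros Hn. apply Hz. intros x hx. apply NNPP; intros ne.
        apply Hn. exists (pairK x (z x)), x, (z x); auto.
      * intros (k & x & v & E & h1 & h2 & h3) Hz. apply h2. rewrite <- h3; auto.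
Qed.

Definition basic3 (F : Baire -> Baire -> Baire -> Prop) : Prop :=
  exists U V W, basic1 U /\ basic1 V /\ basic1 W /\
    forall a b c, F a b c <-> U a /\ V b /\ W c.
Definition open3 (O : Baire -> Baire -> Baire -> Prop) : Prop :=
  exists F : K -> (Baire -> Baire -> Baire -> Prop),
    (forall k, basic3 (F k)) /\ forall a b c, O a b c <-> exists k, F k a b c.
Definition closed3 (C : Baire -> Baire -> Baire -> Prop) : Prop :=
  open3 (fun a b c => ~ C a b c).

Lemma basic3_ext F G : basic3 F -> (forall a b c, F a b c <-> G a b c) -> basic3 G.
Proof.
  intros (U & V & W & hU & hV & hW & E) E'. exists U, V, W.
  split; [|split; [|split]]; auto. intros a b c; rewrite <- E'; apply E.
Qed.

Lemma basic3_empty : basic3 (fun _ _ _ => False).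
Proof.
  exists (fun _ => False), (fun _ => True), (fun _ => True).
  repeat split; auto using basic1_empty, basic1_full; tauto.
Qed.

Lemma basic3_full : basic3 (fun _ _ _ => True).
Proof.
  exists (fun _ => True), (fun _ => True), (fun _ => True). repeat split; auto using basic1_full.
Qed.

Lemma basic3_inter F G : basic3 F -> basic3 G -> basic3 (fun a b c => F a b c /\ G a b c).
Proof.
  intros (U & V & W & h1 & h2 & h3 & E) (U' & V' & W' & h1' & h2' & h3' & E').
  exists (fun z => U z /\ U' z), (fun z => V z /\ V' z), (fun z => W z /\ W' z).
  repeat split; auto using basic1_inter; intros; rewrite ?E, ?E' in *; tauto.
Qed.

Lemma basic3_point3 (t v : K) : basic3 (fun a b c => c t = v).
Proof.
  exists (fun _ => True), (fun _ => True), (fun c => c t = v).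
  repeat split; auto using basic1_full, basic1_point; tauto.
Qed.

Lemma open3_ext O O' : open3 O -> (forall a b c, O a b c <-> O' a b c) -> open3 O'.
Proof. intros (F & h1 & h2) E; exists F; split; auto; intros; rewrite <- E; auto. Qed.

Lemma open3_basic F : basic3 F -> open3 F.
Proof.
  intros H; exists (fun _ => F); split; auto.
  intros; split; [exists k0; auto|intros [_ ?]; auto].
Qed.

Lemma open3_empty : open3 (fun _ _ _ => False).
Proof. eapply open3_ext; [apply open3_basic, basic3_empty|]; tauto. Qed.

Lemma open3_union (O : K -> (Baire -> Baire -> Baire -> Prop)) :
  (forall k, open3 (O k)) -> open3 (fun a b c => exists k, O k a b c).
Proof.
  intros H. destruct (choice _ H) as [F HF].
  exists (fun m a b c => exists k j, m = pairK k j /\ F k j a b c). split.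
  - intros m. destruct (classic (exists k j, m = pairK k j)) as [(k & j & ->)|Hc].
    + eapply basic3_ext; [apply (proj1 (HF k) j)|].
      intros a b c; split; [intros; exists k, j; auto|].
      intros (k' & j' & E & h). apply (pairK_inj Hreg) in E. destruct E; subst; auto.
    + eapply basic3_ext; [apply basic3_empty|].
      intros a b c; split; [intros []|]. intros (k & j & E & _); apply Hc; eauto.
  - intros a b c; split.
    + intros [k Hk]. apply (proj2 (HF k)) in Hk. destruct Hk as [j Hj].
      exists (pairK k j), k, j; auto.
    + intros (m & k & j & E & Hj). exists k. apply (proj2 (HF k)). eauto.
Qed.

Lemma open3_or O1 O2 : open3 O1 -> open3 O2 -> open3 (fun a b c => O1 a b c \/ O2 a b c).
Proof.
  intros H1 H2.
  apply open3_ext with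
    (fun a b c => exists k, (k = k0 /\ O1 a b c) \/ (k <> k0 /\ O2 a b c)).
  - apply (open3_union (fun k a b c => (k = k0 /\ O1 a b c) \/ (k <> k0 /\ O2 a b c))).
    intros k. destruct (classic (k = k0)) as [E|E].
    + eapply open3_ext; [apply H1|]. intros; tauto.
    + eapply open3_ext; [apply H2|]. intros; tauto.
  - intros a b c; split.
    + intros (k & [[_ h]|[_ h]]); auto.
    + intros [h|h]; [exists k0; auto|]. exists (natK 1). right; split; auto.
      exact (natK_neq Hreg 1 0 ltac:(lia)).
Qed.

Lemma open3_inter_basic O B : open3 O -> basic3 B -> open3 (fun a b c => O a b c /\ B a b c).
Proof.
  intros (F & h1 & h2) HB. exists (fun k a b c => F k a b c /\ B a b c); split.
  - intros k; apply basic3_inter; auto.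
  - intros a b c; rewrite h2; split; [intros [[k ?] ?]|intros [k [? ?]]]; eauto.
Qed.

Lemma open3_reindex3 (h : K -> K) O : injective h -> open3 O ->
  open3 (fun a b c => O a b (fun x => c (h x))).
Proof.
  intros hinj (F & h1 & h2). exists (fun k a b c => F k a b (fun x => c (h x))). split.
  - intros k. destruct (h1 k) as (U & V & W & g1 & g2 & g3 & g4).
    exists U, V, (fun c => W (fun x => c (h x))).
    split; [|split; [|split]]; auto using basic1_reindex.
  - intros; apply h2.
Qed.

Lemma open3_compl1 U : basic1 U -> open3 (fun a b c => ~ U a).
Proof.
  intros HU. destruct (basic1_compl _ HU) as (F & h1 & h2).
  exists (fun k a b c => F k a); split; [|intros; apply h2].
  intros k; exists (F k), (fun _ => True), (fun _ => True).
  repeat split; auto using basic1_full; tauto.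
Qed.

Lemma open3_compl2 U : basic1 U -> open3 (fun a b c => ~ U b).
Proof.
  intros HU. destruct (basic1_compl _ HU) as (F & h1 & h2).
  exists (fun k a b c => F k b); split; [|intros; apply h2].
  intros k; exists (fun _ => True), (F k), (fun _ => True).
  repeat split; auto using basic1_full; tauto.
Qed.

Lemma closed3_local (C : Baire -> Baire -> Baire -> Prop) : closed3 C -> forall a b c,
  (forall q, exists a' b' c', C a' b' c' /\
     forall x, lt x q -> a' x = a x /\ b' x = b x /\ c' x = c x) ->
  C a b c.
Proof.
  intros (F & hF & E) a b c H. apply NNPP; intros Hn. apply E in Hn. destruct Hn as [k Hk].
  destruct (hF k) as (U & V & W & hU & hV & hW & EF). apply EF in Hk.
  destruct Hk as (Ua & Vb & Wc).
  destruct (basic1_local U hU) as [h|[q1 h1]]; [eapply h; eauto|].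
  destruct (basic1_local V hV) as [h|[q2 h2]]; [eapply h; eauto|].
  destruct (basic1_local W hW) as [h|[q3 h3]]; [eapply h; eauto|].
  destruct (exists_gt3 Hreg q1 q2 q3) as (q & g1 & g2 & g3).
  destruct (H q) as (a' & b' & c' & HC & Hagree).
  apply (proj2 (E a' b' c')); [|exact HC]. exists k. apply EF.
  repeat split; [apply (h1 a)|apply (h2 b)|apply (h3 c)]; auto;
    intros x hx; symmetry; apply Hagree; eapply (lt_trans Hreg); eauto.
Qed.

Lemma exists_pairK_extension (W : K -> K -> K) : exists c : Baire, forall k x, c (pairK k x) = W k x.
Proof.
  set (dec := fun y => epsilon (inhabits (k0, k0)) (fun p : K * K => pairK (fst p) (snd p) = y)).
  exists (fun y => W (fst (dec y)) (snd (dec y))). intros k x.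
  assert (E : pairK (fst (dec (pairK k x))) (snd (dec (pairK k x))) = pairK k x).
  { apply (epsilon_spec (inhabits (k0, k0)) (fun p : K * K => pairK (fst p) (snd p) = pairK k x)).
    exists (k, x); auto. }
  apply (pairK_inj Hreg) in E. destruct E as [-> ->]; auto.
Qed.

Definition closed_proj (B : Baire * Baire -> Prop) : Prop :=
  exists C, closed3 C /\ forall a b, B (a, b) <-> exists c, C a b c.

Lemma closed_proj_ext B B' : closed_proj B -> (forall p, B p <-> B' p) -> closed_proj B'.
Proof. intros (C & h1 & h2) E; exists C; split; auto; intros; rewrite <- E; auto. Qed.

Lemma closed_proj_empty : closed_proj (fun _ => False).
Proof.
  exists (fun _ _ _ => False); split.
  - eapply open3_ext; [apply open3_basic, basic3_full|]; tauto.
  - intros; split; [intros []|intros [_ []]].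
Qed.

Lemma closed_proj_full : closed_proj (fun _ => True).
Proof.
  exists (fun _ _ _ => True); split.
  - eapply open3_ext; [apply open3_empty|]; tauto.
  - intros; split; auto; intros; exists (fun _ => k0); auto.
Qed.

Lemma closed_proj_basic B : basic2 B -> closed_proj B.
Proof.
  intros (U & V & hU & hV & E). exists (fun a b c => U a /\ V b). split.
  - eapply open3_ext; [apply (open3_or _ _ (open3_compl1 _ hU) (open3_compl2 _ hV))|].
    intros; tauto.
  - intros a b; rewrite E; simpl; split; [intros; exists (fun _ => k0); auto|intros [_ ?]; auto].
Qed.

(* The witness for the union codes the index at [pairK k0 k0] and the witness for that
   index on the range of [pairK (natK 1)]. *)
Lemma closed_proj_unionK (B : K -> (Baire * Baire -> Prop)) :
  (forall k, closed_proj (B k)) -> closed_proj (fun p => exists k, B k p).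
Proof.
  intros HB. destruct (choice _ HB) as [C HC].
  set (t := pairK k0 k0). set (h := pairK (natK 1)).
  exists (fun a b c => C (c t) a b (fun x => c (h x))). split.
  - apply open3_ext with
      (fun a b c => exists k, ~ C k a b (fun x => c (h x)) /\ c t = k).
    + apply (open3_union (fun k a b c => ~ C k a b (fun x => c (h x)) /\ c t = k)).
      intros k. apply open3_inter_basic; [|apply basic3_point3].
      apply (open3_reindex3 h (fun a b c => ~ C k a b c)); [apply pairK_inj_r|apply HC].
    + intros a b c; split; [intros (k & Hk & <-); auto|intros Hc; exists (c t); auto].
  - intros a b; split.
    + intros [k Hk]. apply (proj2 (HC k)) in Hk. destruct Hk as [c Hc].
      destruct (exists_pairK_extension (fun i x => if excluded_middle_informative (i = k0) then k
                                           else c x)) as [c' Hc'].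
      exists c'. unfold t, h. rewrite Hc'.
      destruct (excluded_middle_informative (k0 = k0)) as [_|]; [|tauto].
      replace (fun x => c' (pairK (natK 1) x)) with c; auto.
      apply functional_extensionality; intros x; rewrite Hc'.
      destruct (excluded_middle_informative (natK 1 = k0)) as [E|]; auto.
      exfalso; exact (natK_neq Hreg 1 0 ltac:(lia) E).
    + intros [c Hc]. exists (c t). apply (proj2 (HC (c t))). eauto.
Qed.

Lemma closed_proj_interK (B : K -> (Baire * Baire -> Prop)) :
  (forall k, closed_proj (B k)) -> closed_proj (fun p => forall k, B k p).
Proof.
  intros HB. destruct (choice _ HB) as [C HC].
  exists (fun a b c => forall k, C k a b (fun x => c (pairK k x))). split.
  - apply open3_ext with (fun a b c => exists k, ~ C k a b (fun x => c (pairK k x))).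
    + apply (open3_union (fun k a b c => ~ C k a b (fun x => c (pairK k x)))).
      intros k. apply (open3_reindex3 (pairK k) (fun a b c => ~ C k a b c));
        [apply pairK_inj_r|apply HC].
    + intros a b c; split; [intros (k & h) H; apply h; auto|].
      intros h; apply NNPP; intros h'; apply h; intros k.
      apply NNPP; intros h''; apply h'; eauto.
  - intros a b; split.
    + intros Hk. destruct (choice (fun k c => C k a b c) (fun k => proj1 (proj2 (HC k) a b) (Hk k)))
        as [W HW].
      destruct (exists_pairK_extension W) as [c Hc]. exists c. intros k.
      replace (fun x => c (pairK k x)) with (W k); auto.
      apply functional_extensionality; intros; rewrite Hc; auto.
    + intros [c Hc] k. apply (proj2 (HC k)). eauto.
Qed.

Lemma closed_proj_union (I : Type) (B : I -> (Baire * Baire -> Prop)) :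
  card_le I K -> (forall i, closed_proj (B i)) -> closed_proj (fun p => exists i, B i p).
Proof.
  intros [f finj] HB.
  eapply closed_proj_ext; [apply (closed_proj_unionK (fun k p => exists i, f i = k /\ B i p))|].
  - intros k. destruct (classic (exists i, f i = k)) as [[i <-]|Hk].
    + eapply closed_proj_ext; [apply (HB i)|]. intros p; split; [eauto|].
      intros (j & Ej & Hj). apply finj in Ej; subst; auto.
    + eapply closed_proj_ext; [apply closed_proj_empty|].
      intros p; split; [intros []|intros (i & Ei & _); apply Hk; eauto].
  - intros p; split; [intros (k & i & _ & h); eauto|intros [i h]; eauto].
Qed.

Lemma closed_proj_inter (I : Type) (B : I -> (Baire * Baire -> Prop)) :
  card_le I K -> (forall i, closed_proj (B i)) -> closed_proj (fun p => forall i, B i p).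
Proof.
  intros [f finj] HB.
  eapply closed_proj_ext; [apply (closed_proj_interK (fun k p => forall i, f i = k -> B i p))|].
  - intros k. destruct (classic (exists i, f i = k)) as [[i <-]|Hk].
    + eapply closed_proj_ext; [apply (HB i)|]. intros p; split; [|intros h; apply h; auto].
      intros h j Ej. apply finj in Ej; subst; auto.
    + eapply closed_proj_ext; [apply closed_proj_full|].
      intros p; split; auto. intros _ i Ei; exfalso; apply Hk; eauto.
  - intros p; split; [intros h i; exact (h (f i) i eq_refl)|intros h k i _; apply h].
Qed.

Lemma closed_proj_compl_basic B : basic2 B -> closed_proj (fun p => ~ B p).
Proof.
  intros (U & V & hU & hV & E).
  destruct (basic1_compl _ hU) as (FU & hFU & EU). destruct (basic1_compl _ hV) as (FV & hFV & EV).
  eapply closed_proj_ext;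
    [apply (closed_proj_union bool (fun i p => if i then exists k, FU k (fst p)
                                               else exists k, FV k (snd p)));
     [apply (card_le_bool Hreg)|intros [|]]|].
  - apply (closed_proj_union K (fun k p => FU k (fst p))); [apply card_le_refl|].
    intros k; apply closed_proj_basic. exists (FU k), (fun _ => True).
    repeat split; auto using basic1_full; tauto.
  - apply (closed_proj_union K (fun k p => FV k (snd p))); [apply card_le_refl|].
    intros k; apply closed_proj_basic. exists (fun _ => True), (FV k).
    repeat split; auto using basic1_full; tauto.
  - intros p; rewrite E. split.
    + intros [[|] h]; [apply EU in h|apply EV in h]; tauto.
    + intros h. apply not_and_or in h.
      destruct h as [h|h]; [exists true; apply EU|exists false; apply EV]; auto.
Qed.

Lemma kBorel_closed_proj B :
  @kBorel K _ basic2 B -> closed_proj B /\ closed_proj (fun p => ~ B p).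
Proof.
  intros HB. induction HB as [U HU|U HU IH|I F HI HF IH|I F HI HF IH|U V HU IH E].
  - split; [apply closed_proj_basic|apply closed_proj_compl_basic]; auto.
  - split; [exact (proj2 IH)|]. eapply closed_proj_ext; [exact (proj1 IH)|].
    intros p; split; [tauto|apply NNPP].
  - split; [apply closed_proj_union; auto; apply IH|].
    eapply closed_proj_ext; [apply (closed_proj_inter I (fun i p => ~ F i p)); auto; apply IH|].
    intros p; split; [intros h [i hi]; exact (h i hi)|intros h i hi; eauto].
  - split; [apply closed_proj_inter; auto; apply IH|].
    eapply closed_proj_ext; [apply (closed_proj_union I (fun i p => ~ F i p)); auto; apply IH|].
    intros p; split; [intros [i hi] h; exact (hi (h i))|].
    intros h; apply NNPP; intros h'; apply h; intros i; apply NNPP; eauto.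
  - split; eapply closed_proj_ext; [exact (proj1 IH)| |exact (proj2 IH)|];
      intros p; specialize (E p); tauto.
Qed.

Lemma Sigma11_closed_proj (A : Baire -> Prop) : Sigma11 A ->
  exists C, closed3 C /\ forall a, A a <-> exists b c, C a b c.
Proof.
  intros (B & HB & E). destruct (proj1 (kBorel_closed_proj B HB)) as (C & h1 & h2).
  exists C; split; auto. intros a; rewrite E; split.
  - intros [b Hb]; apply h2 in Hb; eauto.
  - intros (b & c & h); exists b; apply h2; eauto.
Qed.

End Basic.

(** * The game tree *)

Section GameTree.
Context {K : Type} {lt : K -> K -> Prop} (Hreg : regular_cardinal lt).

Notation le := (le lt).
Notation k0 := (k0 Hreg).
Notation pairK := (pairK Hreg).
Notation natK := (natK Hreg).
Notation succK := (succK Hreg).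
Notation Baire := (@Baire K).

Variables C1 C2 : Baire -> Baire -> Baire -> Prop.

(* A position at stage [p] records the round played at every earlier stage [x]: II's triple
   [(a x, b x, c x)] and I's pair [(b' x, c' x)]. At stage [p], II plays a triple and then I
   a pair ([Start], [Moved]); once I cannot stay inside [C2], I challenges a coordinate [g]
   and II answers a value [w] ([Challenge], [Answer]), winning iff [xi g = w] and [w] agrees
   with II's earlier [a g] when [g < p]. *)
Definition Round : Type := ((K * K * K) * (K * K))%type.
Definition round0 : Round := ((k0, k0, k0), (k0, k0)).
Definition round_a (r : Round) : K := fst (fst (fst r)).

Inductive phase : Type :=
| Start
| Moved (m : K * K * K)
| Challenge (g : K)
| Answer (g w : K).

Record pos : Type := mkpos { stage : K; hist : K -> Round; phase_of : phase }.

Definition aliveII (d : K -> Round) (q : K) : Prop :=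
  exists a b c, C1 a b c /\ forall x, lt x q -> fst (d x) = (a x, b x, c x).
Definition aliveI (d : K -> Round) (q : K) : Prop :=
  exists a b c, C2 a b c /\ forall x, lt x q -> round_a (d x) = a x /\ snd (d x) = (b x, c x).

Definition valid (t : pos) : Prop :=
  (forall x, ~ lt x (stage t) -> hist t x = round0) /\
  (forall q, lt q (stage t) -> aliveII (hist t) q /\ aliveI (hist t) q) /\
  match phase_of t with
  | Start => True
  | Moved _ => aliveII (hist t) (stage t) /\ aliveI (hist t) (stage t)
  | Challenge _ | Answer _ _ => aliveII (hist t) (stage t) /\ ~ aliveI (hist t) (stage t)
  end.

Definition Node : Type := {t : pos | valid t}.
Definition stageN (n : Node) : K := stage (proj1_sig n).
Definition histN (n : Node) : K -> Round := hist (proj1_sig n).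
Definition phaseN (n : Node) : phase := phase_of (proj1_sig n).

(* [phase_compat ph r]: a node of phase [ph] lies below a position whose history plays [r]
   at its stage. *)
Definition phase_compat (ph : phase) (r : Round) : Prop :=
  match ph with Start => True | Moved m => fst r = m | _ => False end.
Definition phase_lt (ph1 ph2 : phase) : Prop :=
  match ph1, ph2 with
  | Start, Moved _ | Start, Challenge _ | Start, Answer _ _ => True
  | Challenge g, Answer g' _ => g = g'
  | _, _ => False
  end.
Definition phase_rank (ph : phase) : nat :=
  match ph with Start => 0 | Moved _ | Challenge _ => 1 | Answer _ _ => 2 end.

Definition pos_lt (t1 t2 : pos) : Prop :=
  (lt (stage t1) (stage t2) /\ (forall x, lt x (stage t1) -> hist t1 x = hist t2 x) /\
     phase_compat (phase_of t1) (hist t2 (stage t1))) \/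
  (stage t1 = stage t2 /\ hist t1 = hist t2 /\ phase_lt (phase_of t1) (phase_of t2)).

Definition node_lt (n1 n2 : Node) : Prop := pos_lt (proj1_sig n1) (proj1_sig n2).
Definition node_le (n1 n2 : Node) : Prop := n1 = n2 \/ node_lt n1 n2.

Lemma node_eq (n1 n2 : Node) : proj1_sig n1 = proj1_sig n2 -> n1 = n2.
Proof. apply proj1_sig_inj. Qed.

Lemma pos_eq (t1 t2 : pos) :
  stage t1 = stage t2 -> hist t1 = hist t2 -> phase_of t1 = phase_of t2 -> t1 = t2.
Proof. destruct t1, t2; simpl; intros; subst; auto. Qed.

Lemma phase_lt_rank ph1 ph2 : phase_lt ph1 ph2 -> phase_rank ph1 < phase_rank ph2.
Proof. destruct ph1, ph2; simpl; try tauto; lia. Qed.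

Lemma phase_lt_trans a b c : phase_lt a b -> phase_lt b c -> phase_lt a c.
Proof. destruct a, b, c; simpl; auto; tauto. Qed.

Lemma phase_compat_lt a b r : phase_lt a b -> phase_compat b r -> phase_compat a r.
Proof. destruct a, b; simpl; tauto. Qed.

Lemma phase_lt_comparable a b c :
  phase_lt a c -> phase_lt b c -> phase_lt a b \/ a = b \/ phase_lt b a.
Proof. destruct a, b, c; simpl; try tauto; intros; subst; auto. Qed.

Lemma phase_compat_comparable a b r :
  phase_compat a r -> phase_compat b r -> phase_lt a b \/ a = b \/ phase_lt b a.
Proof. destruct a, b; simpl; try tauto; intros; subst; auto. Qed.

Lemma pos_lt_irrefl t : ~ pos_lt t t.
Proof.
  intros [(H & _)|(_ & _ & H)]; [exact (lt_irrefl Hreg _ H)|apply phase_lt_rank in H; lia].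
Qed.

Lemma pos_lt_trans t1 t2 t3 : pos_lt t1 t2 -> pos_lt t2 t3 -> pos_lt t1 t3.
Proof.
  intros [(h1 & h2 & h3)|(h1 & h2 & h3)] [(g1 & g2 & g3)|(g1 & g2 & g3)].
  - left; split; [eapply (lt_trans Hreg); eauto|split].
    + intros x hx; rewrite h2, g2; auto; eapply (lt_trans Hreg); eauto.
    + rewrite <- g2; auto.
  - left; rewrite <- g1, <- g2; auto.
  - left; rewrite h1, h2; split; auto; split; auto. eapply phase_compat_lt; eauto.
  - right; split; [congruence|split; [congruence|eapply phase_lt_trans; eauto]].
Qed.

Lemma pos_lt_measure t1 t2 : pos_lt t1 t2 ->
  lt (stage t1) (stage t2) \/
  (stage t1 = stage t2 /\ phase_rank (phase_of t1) < phase_rank (phase_of t2)).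
Proof. intros [(h1 & _)|(h1 & _ & h3)]; auto. right; split; auto; apply phase_lt_rank; auto. Qed.

Lemma pos_lt_wf : well_founded pos_lt.
Proof.
  enough (H : forall p n t, stage t = p -> phase_rank (phase_of t) = n -> Acc pos_lt t)
    by (intros t; eauto).
  intros p; induction p as [p IHp] using (well_founded_ind (lt_wf Hreg)).
  intros n; induction n as [n IHn] using (well_founded_ind Wf_nat.lt_wf).
  intros t E1 E2; constructor; intros t' H. apply pos_lt_measure in H.
  destruct H as [H|[H H']]; [eapply IHp|eapply IHn]; eauto; congruence.
Qed.

Lemma node_lt_wf : well_founded node_lt.
Proof. exact (wf_inverse_image Node pos pos_lt (@proj1_sig _ _) pos_lt_wf). Qed.

Lemma node_lt_trans n1 n2 n3 : node_lt n1 n2 -> node_lt n2 n3 -> node_lt n1 n3.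
Proof. apply pos_lt_trans. Qed.
Lemma node_lt_irrefl n : ~ node_lt n n.
Proof. apply pos_lt_irrefl. Qed.
Lemma node_le_trans n1 n2 n3 : node_le n1 n2 -> node_le n2 n3 -> node_le n1 n3.
Proof. intros [<-|h] [<-|h']; unfold node_le; auto. right; eapply node_lt_trans; eauto. Qed.
Lemma node_lt_le_trans n1 n2 n3 : node_lt n1 n2 -> node_le n2 n3 -> node_lt n1 n3.
Proof. intros h [<-|h']; auto; eapply node_lt_trans; eauto. Qed.

Lemma node_le_stage (n1 n2 : Node) : node_le n1 n2 -> le (stageN n1) (stageN n2).
Proof.
  intros [<-|H]; [right; auto|].
  apply pos_lt_measure in H. destruct H as [H|[H _]]; [left|right]; auto.
Qed.

Lemma node_le_hist (n1 n2 : Node) :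
  node_le n1 n2 -> forall x, lt x (stageN n1) -> histN n1 x = histN n2 x.
Proof. intros [<-|[(h1 & h2 & h3)|(h1 & h2 & h3)]] x hx; unfold histN; auto; rewrite h2; auto. Qed.

Lemma node_le_phase_compat (s n : Node) :
  node_le s n -> lt (stageN s) (stageN n) -> phase_compat (phaseN s) (histN n (stageN s)).
Proof.
  intros [<-|[(h1 & h2 & h3)|(h1 & h2 & h3)]] hl; auto.
  - exfalso; exact (lt_irrefl Hreg _ hl).
  - exfalso; unfold stageN in hl; rewrite h1 in hl; exact (lt_irrefl Hreg _ hl).
Qed.

Lemma aliveII_ext d d' q : (forall x, lt x q -> d x = d' x) -> aliveII d q -> aliveII d' q.
Proof.
  intros E (a & b & c & h1 & h2); exists a, b, c; split; auto.
  intros x hx; rewrite <- E; auto.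
Qed.
Lemma aliveI_ext d d' q : (forall x, lt x q -> d x = d' x) -> aliveI d q -> aliveI d' q.
Proof.
  intros E (a & b & c & h1 & h2); exists a, b, c; split; auto.
  intros x hx; rewrite <- E; auto.
Qed.

Lemma hist_ext (n1 n2 : Node) : stageN n1 = stageN n2 ->
  (forall x, lt x (stageN n1) -> histN n1 x = histN n2 x) -> histN n1 = histN n2.
Proof.
  destruct (proj2_sig n1) as (V1 & _), (proj2_sig n2) as (W1 & _). intros E H.
  apply functional_extensionality; intros x.
  destruct (classic (lt x (stageN n1))) as [h|h]; auto.
  unfold histN, stageN in *. rewrite V1, W1; auto. congruence.
Qed.

Lemma alive_below (n1 n2 : Node) : lt (stageN n1) (stageN n2) ->
  (forall x, lt x (stageN n1) -> histN n1 x = histN n2 x) ->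
  aliveII (histN n1) (stageN n1) /\ aliveI (histN n1) (stageN n1).
Proof.
  intros hl E. destruct (proj2_sig n2) as (_ & V2 & _). destruct (V2 _ hl) as [h1 h2].
  split; [eapply aliveII_ext; [|exact h1]|eapply aliveI_ext; [|exact h2]];
    intros x hx; symmetry; auto.
Qed.

Lemma node_same_stage_comparable (a b : Node) : stageN a = stageN b -> histN a = histN b ->
  (phase_lt (phaseN a) (phaseN b) \/ phaseN a = phaseN b \/ phase_lt (phaseN b) (phaseN a)) ->
  node_lt a b \/ a = b \/ node_lt b a.
Proof.
  intros Es Eh [H|[H|H]]; [left|right; left|right; right].
  - right; auto.
  - apply node_eq, pos_eq; auto.
  - right; auto.
Qed.

Definition pos_restr (t : pos) (x : K) : pos :=
  mkpos x (fun z => if excluded_middle_informative (lt z x) then hist t z else round0) Start.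

Lemma pos_restr_valid t x : valid t -> lt x (stage t) -> valid (pos_restr t x).
Proof.
  intros (V1 & V2 & V3) hx. split; [|split]; simpl; auto.
  - intros z hz; destruct (excluded_middle_informative (lt z x)); tauto.
  - intros q hq. destruct (V2 q) as [h1 h2]; [eapply (lt_trans Hreg); eauto|].
    assert (E : forall z, lt z q ->
               hist t z = if excluded_middle_informative (lt z x) then hist t z else round0).
    { intros z hz; destruct (excluded_middle_informative (lt z x)) as [_|n]; auto.
      exfalso; apply n; eapply (lt_trans Hreg); eauto. }
    split; [eapply aliveII_ext|eapply aliveI_ext]; eauto.
Qed.

Lemma pos_restr_lt t x : lt x (stage t) -> pos_lt (pos_restr t x) t.
Proof.
  intros hx; left; simpl; split; auto; split; auto.
  intros z hz; destruct (excluded_middle_informative (lt z x)); tauto.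
Qed.

Lemma pos_restr_alive t x : valid t -> lt x (stage t) ->
  aliveII (hist (pos_restr t x)) x /\ aliveI (hist (pos_restr t x)) x.
Proof.
  intros (V1 & V2 & V3) hx. destruct (V2 x hx) as [h1 h2]. simpl.
  assert (E : forall z, lt z x ->
             hist t z = if excluded_middle_informative (lt z x) then hist t z else round0)
    by (intros z hz; destruct (excluded_middle_informative (lt z x)); tauto).
  split; [eapply aliveII_ext|eapply aliveI_ext]; eauto.
Qed.

Definition node_restr (n : Node) (x : K) (hx : lt x (stageN n)) : Node :=
  exist _ (pos_restr (proj1_sig n) x) (pos_restr_valid _ _ (proj2_sig n) hx).

Definition kmin : K :=
  proj1_sig (constructive_indefinite_description _
               (least_elem Hreg (fun _ => True) (ex_intro _ k0 I))).
Lemma not_lt_kmin x : ~ lt x kmin.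
Proof.
  apply (le_not_lt Hreg). unfold kmin.
  exact (proj2 (proj2_sig (constructive_indefinite_description _
                              (least_elem Hreg (fun _ => True) (ex_intro _ k0 I)))) x I).
Qed.

Definition pos_root : pos := mkpos kmin (fun _ => round0) Start.
Lemma pos_root_valid : valid pos_root.
Proof. split; [|split]; simpl; auto. intros q hq; exfalso; exact (not_lt_kmin _ hq). Qed.
Definition root : Node := exist _ pos_root pos_root_valid.

Lemma root_le n : node_le root n.
Proof.
  destruct n as [t Vt]. destruct (not_lt_le Hreg _ _ (not_lt_kmin (stage t))) as [h|h].
  - right; left; simpl; split; auto; split; [|auto].
    intros x hx; exfalso; exact (not_lt_kmin _ hx).
  - assert (Ed : hist t = fun _ => round0).
    { apply functional_extensionality; intros x; apply (proj1 Vt).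
      rewrite <- h; apply not_lt_kmin. }
    destruct (phase_of t) eqn:Eph.
    + left; apply node_eq, pos_eq; simpl; auto.
    + right; right; simpl; rewrite Eph; auto.
    + right; right; simpl; rewrite Eph; auto.
    + right; right; simpl; rewrite Eph; auto.
Qed.

Lemma node_lt_same_stage (a t : Node) :
  node_lt a t -> stageN a = stageN t -> phase_lt (phaseN a) (phaseN t).
Proof.
  intros [(h & _)|(_ & _ & h)] E; auto.
  exfalso; unfold stageN in E; rewrite E in h; exact (lt_irrefl Hreg _ h).
Qed.

Lemma pred_stage_lt (t a b : Node) : node_lt a t -> node_lt b t ->
  lt (stageN a) (stageN b) -> node_lt a b.
Proof.
  intros Ha Hb h.
  assert (hbt : le (stageN b) (stageN t)) by (apply node_le_stage; right; auto).
  left; split; [exact h|split].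
  - intros x hx. change (histN a x = histN b x).
    rewrite (node_le_hist a t), (node_le_hist b t); unfold node_le; auto.
    eapply (lt_trans Hreg); eauto.
  - change (phase_compat (phaseN a) (histN b (stageN a))).
    rewrite (node_le_hist b t); [|right; auto|auto].
    apply node_le_phase_compat; [right; auto|]. eapply (lt_le_trans Hreg); eauto.
Qed.

Lemma pred_comparable t a b : node_lt a t -> node_lt b t -> node_lt a b \/ a = b \/ node_lt b a.
Proof.
  intros Ha Hb. destruct (lt_total Hreg (stageN a) (stageN b)) as [h|[h|h]].
  - left; eapply pred_stage_lt; eauto.
  - apply node_same_stage_comparable; auto.
    + apply hist_ext; auto. intros x hx.
      rewrite (node_le_hist a t), (node_le_hist b t); unfold node_le; auto. congruence.
    + destruct (node_le_stage a t (or_intror Ha)) as [ha|ha].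
      * apply (phase_compat_comparable _ _ (histN t (stageN a))).
        -- apply node_le_phase_compat; [right|]; auto.
        -- rewrite h. apply node_le_phase_compat; [right|]; auto. congruence.
      * apply (phase_lt_comparable _ _ (phaseN t)); apply node_lt_same_stage; congruence.
  - right; right; eapply pred_stage_lt; eauto.
Qed.

Definition chain (G : Node -> Prop) : Prop :=
  forall n1 n2, G n1 -> G n2 -> node_le n1 n2 \/ node_le n2 n1.

Lemma chain_hist G n1 n2 x : chain G -> G n1 -> G n2 ->
  lt x (stageN n1) -> lt x (stageN n2) -> histN n1 x = histN n2 x.
Proof.
  intros HG h1 h2 x1 x2. destruct (HG n1 n2 h1 h2) as [H|H].
  - apply node_le_hist; auto.
  - symmetry; apply node_le_hist; auto.
Qed.

Lemma chain_phase_compat G n n' : chain G -> G n -> G n' -> lt (stageN n) (stageN n') ->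
  phase_compat (phaseN n) (histN n' (stageN n)).
Proof.
  intros HG h h' hl. destruct (HG n n' h h') as [H|H].
  - apply node_le_phase_compat; auto.
  - exfalso. exact (le_not_lt Hreg _ _ (node_le_stage _ _ H) hl).
Qed.

Definition hist_sup (G : Node -> Prop) (x : K) : Round :=
  match excluded_middle_informative (exists n, G n /\ lt x (stageN n)) with
  | left H => histN (proj1_sig (constructive_indefinite_description _ H)) x
  | right _ => round0
  end.

Lemma hist_sup_spec G n x : chain G -> G n -> lt x (stageN n) -> hist_sup G x = histN n x.
Proof.
  intros HG hn hx. unfold hist_sup.
  destruct (excluded_middle_informative _) as [H|H]; [|exfalso; eauto].
  destruct (constructive_indefinite_description _ H) as [n' [h1 h2]]; simpl.
  apply chain_hist with G; auto.
Qed.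

Lemma hist_sup_out G x : (forall n, G n -> ~ lt x (stageN n)) -> hist_sup G x = round0.
Proof.
  intros H; unfold hist_sup.
  destruct (excluded_middle_informative _) as [[n [h1 h2]]|_]; auto. exfalso; eapply H; eauto.
Qed.

Hypothesis HC1 : closed3 C1.
Hypothesis HC2 : closed3 C2.
Hypothesis Hdisj : forall a b c b' c', C1 a b c -> C2 a b' c' -> False.

(* The rounds along a chain with cofinal stages assemble into points of [C1] and [C2]
   (both closed) with the same first coordinate. *)
Lemma chain_not_cofinal G : chain G -> ~ (forall q, exists n, G n /\ lt q (stageN n)).
Proof.
  intros HG Hu.
  set (d := hist_sup G).
  apply (Hdisj (fun x => round_a (d x)) (fun x => snd (fst (fst (d x)))) (fun x => snd (fst (d x)))
           (fun x => fst (snd (d x))) (fun x => snd (snd (d x)))).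
  - apply (closed3_local Hreg C1 HC1). intros q. destruct (Hu q) as [n [hn hq]].
    destruct (proj2_sig n) as [_ [V2 _]]. destruct (V2 q hq) as [(a0 & b0 & c0 & h0 & e0) _].
    exists a0, b0, c0; split; auto. intros x hx.
    unfold d, round_a; rewrite (hist_sup_spec G n); [|auto|auto|eapply (lt_trans Hreg); eauto].
    unfold histN; rewrite (e0 x hx); auto.
  - apply (closed3_local Hreg C2 HC2). intros q. destruct (Hu q) as [n [hn hq]].
    destruct (proj2_sig n) as [_ [V2 _]]. destruct (V2 q hq) as [_ (a0 & b0 & c0 & h0 & e0)].
    exists a0, b0, c0; split; auto. intros x hx. destruct (e0 x hx) as [e1 e2].
    unfold d; rewrite (hist_sup_spec G n); [|auto|auto|eapply (lt_trans Hreg); eauto].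
    unfold histN; rewrite e1, e2; auto.
Qed.

Definition stage_sup (G : Node -> Prop) (ps : K) : Prop :=
  (forall n, G n -> le (stageN n) ps) /\
  (forall q, (forall n, G n -> le (stageN n) q) -> le ps q).

Lemma chain_stage_sup G : chain G -> exists ps, stage_sup G ps.
Proof.
  intros HG. apply (least_elem Hreg).
  apply NNPP; intros Hn. apply (chain_not_cofinal G HG). intros q.
  apply NNPP; intros Hq. apply Hn. exists q.
  intros n hn. apply (not_lt_le Hreg). intros h; apply Hq; eauto.
Qed.

Lemma stage_sup_cofinal G ps : stage_sup G ps ->
  forall x, lt x ps -> exists n, G n /\ lt x (stageN n).
Proof.
  intros [_ Hleast] x hx. apply NNPP; intros Hn.
  apply (le_not_lt Hreg ps x); [apply Hleast|exact hx].
  intros n hn; apply (not_lt_le Hreg); intros h; apply Hn; eauto.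
Qed.

Lemma chain_max G ps : chain G -> stage_sup G ps -> (exists n, G n /\ stageN n = ps) ->
  exists n, G n /\ forall n', G n' -> node_le n' n.
Proof.
  intros HG [Hps _] HA.
  destruct (exists_max_rank _ (fun n => G n /\ stageN n = ps) (fun n => phase_rank (phaseN n)) 2 HA)
    as [n0 [[h0 e0] hmax]].
  { intros n _; destruct (phaseN n); simpl; lia. }
  exists n0; split; auto. intros n' hn'. destruct (HG n' n0 hn' h0) as [H|[E|H]]; auto.
  - subst; left; auto.
  - exfalso. apply pos_lt_measure in H. destruct H as [H|[H H']].
    + apply (le_not_lt Hreg _ _ (Hps n' hn')). fold (stageN n0) in H. rewrite <- e0; auto.
    + specialize (hmax n' (conj hn' (eq_trans (eq_sym H) e0))). unfold phaseN in hmax. lia.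
Qed.

Lemma chain_limit G ps : chain G -> stage_sup G ps -> (forall n, G n -> lt (stageN n) ps) ->
  exists t, stageN t = ps /\ phaseN t = Start /\
    forall n x, G n -> lt x (stageN n) -> histN t x = histN n x.
Proof.
  intros HG Hsup Hlt.
  assert (V : valid (mkpos ps (hist_sup G) Start)).
  { split; [|split]; simpl; auto.
    - intros x hx. apply hist_sup_out. intros n hn h. apply hx. eapply (lt_trans Hreg); eauto.
    - intros q hq. destruct (stage_sup_cofinal G ps Hsup q hq) as [n [hn h]].
      destruct (proj2_sig n) as [_ [V2 _]]. destruct (V2 q h) as [g1 g2].
      assert (E : forall x, lt x q -> histN n x = hist_sup G x).
      { intros x hx; symmetry; apply hist_sup_spec; auto; eapply (lt_trans Hreg); eauto. }
      split; [eapply aliveII_ext|eapply aliveI_ext]; eauto. }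
  exists (exist _ _ V); split; [|split]; auto.
  intros n x hn hx. apply hist_sup_spec; auto.
Qed.

Section Limit.
Variables (G : Node -> Prop) (t : Node).
Hypothesis HG : chain G.
Hypothesis Hsup : stage_sup G (stageN t).
Hypothesis Hbelow : forall n, G n -> lt (stageN n) (stageN t).
Hypothesis Hhist : forall n x, G n -> lt x (stageN n) -> histN t x = histN n x.
Hypothesis Hstart : phaseN t = Start.

Lemma limit_above n : G n -> node_lt n t.
Proof.
  intros hn. left. split; [exact (Hbelow n hn)|split].
  - intros x hx. symmetry; apply Hhist; auto.
  - destruct (stage_sup_cofinal G _ Hsup (stageN n) (Hbelow n hn)) as [n' [hn' h']].
    change (phase_compat (phaseN n) (histN t (stageN n))).
    rewrite (Hhist n'); auto. apply (chain_phase_compat G); auto.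
Qed.

Lemma limit_least u : (forall n, G n -> node_le n u) -> node_le t u.
Proof.
  intros Hu.
  assert (Hhu : forall x, lt x (stageN t) -> histN t x = histN u x).
  { intros x hx. destruct (stage_sup_cofinal G _ Hsup x hx) as [n [hn h]].
    rewrite (Hhist n); auto. apply node_le_hist; auto. }
  destruct (proj2 Hsup (stageN u) (fun n hn => node_le_stage _ _ (Hu n hn))) as [h|h].
  - right; left; split; [exact h|split; [exact Hhu|]].
    change (phase_compat (phaseN t) (histN u (stageN t))).
    rewrite Hstart; exact I.
  - assert (Ed : histN t = histN u) by (apply hist_ext; auto).
    destruct (phaseN u) eqn:Ep.
    + left; apply node_eq, pos_eq; auto. change (phaseN t = phaseN u); congruence.
    + right; right; split; [exact h|split; [exact Ed|]]. fold (phaseN t) (phaseN u).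
      rewrite Hstart, Ep; exact I.
    + right; right; split; [exact h|split; [exact Ed|]]. fold (phaseN t) (phaseN u).
      rewrite Hstart, Ep; exact I.
    + right; right; split; [exact h|split; [exact Ed|]]. fold (phaseN t) (phaseN u).
      rewrite Hstart, Ep; exact I.
Qed.

Lemma limit_preds s : node_lt s t -> exists n, G n /\ node_lt s n.
Proof.
  intros [(h1 & h2 & h3)|(_ & _ & h3)].
  - destruct (stage_sup_cofinal G _ Hsup _ h1) as [n [hn h]]. exists n; split; auto.
    left; split; [exact h|split].
    + intros x hx. rewrite h2; auto. apply (Hhist n); auto. eapply (lt_trans Hreg); eauto.
    + change (phase_compat (phaseN s) (histN n (stageN s))).
      rewrite <- (Hhist n); auto.
  - exfalso. fold (phaseN t) in h3. rewrite Hstart in h3.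
    destruct (phase_of (proj1_sig s)); exact h3.
Qed.

End Limit.

Lemma chain_sup G : chain G ->
  (exists n, G n /\ forall n', G n' -> node_le n' n) \/
  (exists t, stage_sup G (stageN t) /\ (forall n, G n -> lt (stageN n) (stageN t)) /\
     (forall n x, G n -> lt x (stageN n) -> histN t x = histN n x) /\ phaseN t = Start).
Proof.
  intros HG. destruct (chain_stage_sup G HG) as [ps Hsup].
  destruct (classic (exists n, G n /\ stageN n = ps)) as [HA|HB].
  - left; eapply chain_max; eauto.
  - right.
    assert (Hlt : forall n, G n -> lt (stageN n) ps).
    { intros n hn. destruct (proj1 Hsup n hn) as [h|h]; auto. exfalso; apply HB; eauto. }
    destruct (chain_limit G ps HG Hsup Hlt) as (t & Et & Ht & Hh).
    exists t; rewrite Et; auto.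
Qed.

Definition label_of (n : Node) : @label K :=
  match phaseN n with
  | Start =>
      if excluded_middle_informative (aliveII (histN n) (stageN n)) then
        if excluded_middle_informative (aliveI (histN n) (stageN n)) then LUnion else LInter
      else LLeaf (fun _ => False)
  | Moved _ => LInter
  | Challenge _ => LUnion
  | Answer g w => LLeaf (fun xi => xi g = w /\ (lt g (stageN n) -> w = round_a (histN n g)))
  end.

Lemma label_Start_union n : phaseN n = Start ->
  aliveII (histN n) (stageN n) -> aliveI (histN n) (stageN n) -> label_of n = LUnion.
Proof.
  intros E h1 h2; unfold label_of; rewrite E.
  destruct (excluded_middle_informative _); [|tauto].
  destruct (excluded_middle_informative _); tauto.
Qed.

Lemma label_Start_inter n : phaseN n = Start ->
  aliveII (histN n) (stageN n) -> ~ aliveI (histN n) (stageN n) -> label_of n = LInter.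
Proof.
  intros E h1 h2; unfold label_of; rewrite E.
  destruct (excluded_middle_informative _); [|tauto].
  destruct (excluded_middle_informative _); tauto.
Qed.

Lemma label_Start_dead n : phaseN n = Start ->
  ~ aliveII (histN n) (stageN n) -> label_of n = LLeaf (fun _ => False).
Proof. intros E h; unfold label_of; rewrite E. destruct (excluded_middle_informative _); tauto. Qed.

Lemma label_union (n : Node) : label_of n = LUnion ->
  (phaseN n = Start /\ aliveII (histN n) (stageN n) /\ aliveI (histN n) (stageN n)) \/
  (exists g, phaseN n = Challenge g).
Proof.
  unfold label_of. destruct (phaseN n); try discriminate; [|eauto].
  destruct (excluded_middle_informative (aliveII (histN n) (stageN n))); [|discriminate].
  destruct (excluded_middle_informative (aliveI (histN n) (stageN n))); [|discriminate]. auto.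
Qed.

Lemma valid_same_stage (n : Node) ph : valid (mkpos (stageN n) (histN n) ph) <->
  match ph with
  | Start => True
  | Moved _ => aliveII (histN n) (stageN n) /\ aliveI (histN n) (stageN n)
  | _ => aliveII (histN n) (stageN n) /\ ~ aliveI (histN n) (stageN n)
  end.
Proof.
  destruct (proj2_sig n) as (V1 & V2 & _).
  split; [intros (_ & _ & h); exact h|intros h; split; [|split]; auto].
Qed.

Lemma valid_phase (n : Node) :
  match phaseN n with
  | Start => True
  | Moved _ => aliveII (histN n) (stageN n) /\ aliveI (histN n) (stageN n)
  | _ => aliveII (histN n) (stageN n) /\ ~ aliveI (histN n) (stageN n)
  end.
Proof. exact (proj2 (proj2 (proj2_sig n))). Qed.

Definition pos_next (t : pos) (r : Round) : pos :=
  mkpos (succK (stage t))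
    (fun x => if excluded_middle_informative (lt x (stage t)) then hist t x
              else if excluded_middle_informative (x = stage t) then r else round0)
    Start.

Lemma pos_next_valid t m i : valid t -> phase_of t = Moved m -> valid (pos_next t (m, i)).
Proof.
  intros (V1 & V2 & V3) E. rewrite E in V3. destruct V3 as [W1 W2]. split; [|split]; simpl; auto.
  - intros x hx. rewrite (lt_succK Hreg) in hx.
    destruct (excluded_middle_informative (lt x (stage t))) as [h|h];
      [exfalso; apply hx; left; auto|].
    destruct (excluded_middle_informative (x = stage t)) as [h'|h']; auto.
    exfalso; apply hx; right; auto.
  - intros q hq. rewrite (lt_succK Hreg) in hq.
    assert (Ed : forall x, lt x q -> hist t x =
                   (if excluded_middle_informative (lt x (stage t)) then hist t x
                    else if excluded_middle_informative (x = stage t) then (m, i) else round0)).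
    { intros x hx. destruct (excluded_middle_informative (lt x (stage t))) as [_|h]; auto.
      exfalso; apply h. eapply (lt_le_trans Hreg); eauto. }
    destruct hq as [hq|hq].
    + destruct (V2 q hq); split; [eapply aliveII_ext|eapply aliveI_ext]; eauto.
    + subst q; split; [eapply aliveII_ext|eapply aliveI_ext]; eauto.
Qed.

Lemma pos_next_lt t m i : phase_of t = Moved m -> pos_lt t (pos_next t (m, i)).
Proof.
  intros E. left; simpl. split; [apply (succK_spec Hreg)|split].
  - intros x hx. destruct (excluded_middle_informative (lt x (stage t))); tauto.
  - rewrite E. simpl.
    destruct (excluded_middle_informative (lt (stage t) (stage t))) as [h|_];
      [destruct (lt_irrefl Hreg _ h)|].
    destruct (excluded_middle_informative (stage t = stage t)); tauto.
Qed.

Lemma imm_succ_next (n : Node) m i (V : valid (pos_next (proj1_sig n) (m, i))) :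
  phaseN n = Moved m -> imm_succ node_lt n (exist _ _ V).
Proof.
  intros E. split; [apply pos_next_lt; auto|].
  intros [u [H1 H2]].
  destruct H1 as [(a1 & a2 & a3)|(a1 & a2 & a3)]; destruct H2 as [(b1 & b2 & b3)|(b1 & b2 & b3)];
    simpl in *.
  - apply (lt_succK Hreg) in b1. exact (le_not_lt Hreg _ _ b1 a1).
  - destruct (phase_of (proj1_sig u)); simpl in b3; tauto.
  - fold (phaseN n) in a3; rewrite E in a3; simpl in a3; tauto.
  - fold (phaseN n) in a3; rewrite E in a3; simpl in a3; tauto.
Qed.

Lemma imm_succ_same_stage (n s : Node) : stageN s = stageN n -> histN s = histN n ->
  phase_lt (phaseN n) (phaseN s) ->
  (forall ph, phase_lt (phaseN n) ph -> phase_lt ph (phaseN s) -> False) -> imm_succ node_lt n s.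
Proof.
  intros E1 E2 E3 Hb. split; [right; unfold stageN, histN, phaseN in *; auto|].
  intros [u [H1 H2]].
  destruct H1 as [(a1 & a2 & a3)|(a1 & a2 & a3)]; destruct H2 as [(b1 & b2 & b3)|(b1 & b2 & b3)];
    fold (stageN n) (stageN u) (stageN s) (histN n) (histN u) (histN s)
      (phaseN n) (phaseN u) (phaseN s) in *.
  - rewrite E1 in b1. exact (lt_asym Hreg _ _ a1 b1).
  - rewrite E1 in b1. rewrite b1 in a1. exact (lt_irrefl Hreg _ a1).
  - rewrite E1, <- a1 in b1. exact (lt_irrefl Hreg _ b1).
  - eapply Hb; eauto.
Qed.

Lemma dead_no_succ (n s : Node) : ~ aliveII (histN n) (stageN n) -> ~ node_lt n s.
Proof.
  intros h [(h1 & h2 & h3)|(h1 & h2 & h3)].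
  - destruct (proj2_sig s) as [_ [V2 _]]. destruct (V2 _ h1) as [g _]. apply h.
    eapply aliveII_ext; [|exact g]. intros x hx; symmetry; apply h2; auto.
  - pose proof (valid_phase s) as V3. apply h. unfold histN, stageN, phaseN in *; rewrite h1, h2.
    destruct (phase_of (proj1_sig s)); [destruct (phase_of (proj1_sig n)); simpl in h3| | |]; tauto.
Qed.

Lemma Answer_no_succ (n s : Node) g w : phaseN n = Answer g w -> ~ node_lt n s.
Proof.
  intros E [(_ & _ & h)|(_ & _ & h)]; fold (phaseN n) in h; rewrite E in h; [exact h|].
  destruct (phase_of (proj1_sig s)); exact h.
Qed.

Lemma leaf_or_succ (n : Node) :
  (exists U, label_of n = LLeaf U /\ basic1 U /\ leaf node_lt n) \/
  ((label_of n = LUnion \/ label_of n = LInter) /\ exists s, node_lt n s).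
Proof.
  pose proof (valid_phase n) as V. destruct (phaseN n) as [|m|g|g w] eqn:E.
  - destruct (classic (aliveII (histN n) (stageN n))) as [hT|hT];
      [|left; exists (fun _ => False); split; [apply label_Start_dead; auto|]];
      [|split; [apply basic1_empty|intros [s Hs]; exact (dead_no_succ n s hT Hs)]].
    destruct (classic (aliveI (histN n) (stageN n))) as [hS|hS].
    + right; split; [left; apply label_Start_union; auto|].
      assert (Vs : valid (mkpos (stageN n) (histN n) (Moved (k0, k0, k0))))
        by (apply valid_same_stage; auto).
      exists (exist _ _ Vs). right; simpl; split; auto; split; auto.
      fold (phaseN n); rewrite E; exact I.
    + right; split; [right; apply label_Start_inter; auto|].
      assert (Vs : valid (mkpos (stageN n) (histN n) (Challenge k0)))
        by (apply valid_same_stage; auto).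
      exists (exist _ _ Vs). right; simpl; split; auto; split; auto.
      fold (phaseN n); rewrite E; exact I.
  - right; split; [unfold label_of; rewrite E; auto|].
    exists (exist _ _ (pos_next_valid _ m (k0, k0) (proj2_sig n) E)). apply pos_next_lt; auto.
  - right; split; [unfold label_of; rewrite E; auto|].
    assert (Vs : valid (mkpos (stageN n) (histN n) (Answer g k0)))
      by (apply valid_same_stage; auto).
    exists (exist _ _ Vs). right; simpl; split; auto; split; auto.
      fold (phaseN n); rewrite E; simpl; auto.
  - left; eexists; split; [unfold label_of; rewrite E; reflexivity|split].
    + destruct (classic (lt g (stageN n) -> w = round_a (histN n g))) as [h|h].
      * eapply basic1_ext; [apply (basic1_point Hreg g w)|]. intros z; tauto.
      * eapply basic1_ext; [apply basic1_empty|]. intros z; tauto.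
    + intros [s Hs]. exact (Answer_no_succ n s g w E Hs).
Qed.

Lemma leaf_label (n : Node) : leaf node_lt n -> exists U, label_of n = LLeaf U /\ basic1 U.
Proof.
  intros Hl. destruct (leaf_or_succ n) as [(U & h1 & h2 & _)|(_ & H)]; eauto.
  exfalso; apply Hl; auto.
Qed.

Lemma label_leaf (n : Node) U : label_of n = LLeaf U -> leaf node_lt n.
Proof.
  intros E. destruct (leaf_or_succ n) as [(U' & h1 & h2 & h3)|([h|h] & _)]; auto;
    rewrite E in h; discriminate.
Qed.

Lemma imm_succ_cases (n s : Node) : imm_succ node_lt n s ->
  (stageN s = stageN n /\ histN s = histN n /\ phase_lt (phaseN n) (phaseN s)) \/
  (stageN s = succK (stageN n) /\ phaseN s = Start /\
     forall x, lt x (stageN n) -> histN s x = histN n x).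
Proof.
  intros [H Hn]. destruct H as [(h1 & h2 & h3)|(h1 & h2 & h3)]; [right|left; auto].
  split; [|split].
  - destruct (proj2 (succK_spec Hreg (stageN n)) (stageN s) h1) as [h|h]; auto.
    exfalso. apply Hn. exists (node_restr s (succK (stageN n)) h). split.
    + left; simpl. split; [apply (succK_spec Hreg)|split].
      * intros x hx. destruct (excluded_middle_informative (lt x (succK (stageN n)))) as [_|c].
        -- apply h2; auto.
        -- exfalso; apply c. eapply (lt_trans Hreg); eauto. apply (succK_spec Hreg).
      * destruct (excluded_middle_informative (lt (stage (proj1_sig n)) (succK (stageN n))))
          as [_|c];
          [exact h3|exfalso; apply c; apply (succK_spec Hreg)].
    + apply pos_restr_lt; auto.
  - destruct (phaseN s) eqn:E; auto; exfalso.
    all: assert (Vu : valid (mkpos (stageN s) (histN s) Start)) by (apply valid_same_stage; auto).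
    all: apply Hn; exists (exist _ _ Vu); split;
      [left; simpl; auto
      |right; simpl; split; auto; split; auto; fold (phaseN s); rewrite E; exact I].
  - intros x hx; symmetry; apply h2; auto.
Qed.

Definition phase_code (ph : phase) : K :=
  match ph with
  | Start => pairK (natK 0) (natK 0)
  | Moved m => pairK (natK 1) (pairK (pairK (fst (fst m)) (snd (fst m))) (snd m))
  | Challenge g => pairK (natK 2) g
  | Answer g w => pairK (natK 3) (pairK g w)
  end.

Lemma phase_code_inj ph1 ph2 : phase_code ph1 = phase_code ph2 -> ph1 = ph2.
Proof.
  destruct ph1 as [|[[a b] c]|g|g w], ph2 as [|[[a' b'] c']|g'|g' w']; simpl; intros E;
    apply (pairK_inj Hreg) in E; destruct E as [E1 E2];
    try (exfalso; eapply (natK_neq Hreg); [|exact E1]; discriminate); auto.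
  - apply (pairK_inj Hreg) in E2; destruct E2 as [E2 ->].
    apply (pairK_inj Hreg) in E2; destruct E2 as [-> ->]; auto.
  - subst; auto.
  - apply (pairK_inj Hreg) in E2; destruct E2 as [-> ->]; auto.
Qed.

Definition round_code (r : Round) : K :=
  pairK (pairK (pairK (fst (fst (fst r))) (snd (fst (fst r)))) (snd (fst r)))
    (pairK (fst (snd r)) (snd (snd r))).

Lemma round_code_inj r1 r2 : round_code r1 = round_code r2 -> r1 = r2.
Proof.
  destruct r1 as [[[a b] c] [d e]], r2 as [[[a' b'] c'] [d' e']].
  unfold round_code; simpl; intros E.
  apply (pairK_inj Hreg) in E; destruct E as [E1 E2].
  apply (pairK_inj Hreg) in E1; destruct E1 as [E1 ->].
  apply (pairK_inj Hreg) in E1; destruct E1 as [-> ->].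
  apply (pairK_inj Hreg) in E2; destruct E2 as [-> ->]; auto.
Qed.

(* An immediate successor is determined by its phase and by the round at the current stage. *)
Lemma imm_succ_card (n : Node) : card_le {s | imm_succ node_lt n s} K.
Proof.
  exists (fun s => pairK (phase_code (phaseN (proj1_sig s)))
                         (round_code (histN (proj1_sig s) (stageN n)))).
  intros [s1 h1] [s2 h2] E; simpl in E. apply proj1_sig_inj; simpl.
  apply (pairK_inj Hreg) in E; destruct E as [E1 E2].
  apply phase_code_inj in E1. apply round_code_inj in E2.
  apply node_eq.
  destruct (imm_succ_cases n s1 h1) as [(a1 & a2 & a3)|(a1 & a2 & a3)];
    destruct (imm_succ_cases n s2 h2) as [(b1 & b2 & b3)|(b1 & b2 & b3)].
  - apply pos_eq; [exact (eq_trans a1 (eq_sym b1))|exact (eq_trans a2 (eq_sym b2))|exact E1].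
  - exfalso. rewrite E1, b2 in a3. destruct (phaseN n); simpl in a3; tauto.
  - exfalso. rewrite <- E1, a2 in b3. destruct (phaseN n); simpl in b3; tauto.
  - apply pos_eq; [exact (eq_trans a1 (eq_sym b1))| |exact E1].
    apply hist_ext; [congruence|].
    intros x hx. rewrite a1, (lt_succK Hreg) in hx. destruct hx as [hx| ->].
    + rewrite a3, b3; auto.
    + exact E2.
Qed.

Definition node_code (n : Node) : KltK lt :=
  existT _ (succK (stageN n)) (fun b : {b | lt b (succK (stageN n))} =>
    if excluded_middle_informative (lt (proj1_sig b) (stageN n))
    then pairK (natK 1) (round_code (histN n (proj1_sig b)))
    else pairK (natK 0) (phase_code (phaseN n))).

Lemma existT_fun_agree (a1 a2 : K) (g1 : {b | lt b a1} -> K) (g2 : {b | lt b a2} -> K) :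
  existT (fun a => {b | lt b a} -> K) a1 g1 = existT _ a2 g2 ->
  forall x h1 h2, g1 (exist _ x h1) = g2 (exist _ x h2).
Proof.
  intros E. assert (Ea : a1 = a2) by exact (f_equal (@projT1 _ _) E). subst a2.
  apply inj_pairT2 in E. subst g2. intros; f_equal; f_equal; apply proof_irrelevance.
Qed.

Lemma node_code_entry (n : Node) x (h : lt x (succK (stageN n))) :
  projT2 (node_code n) (exist _ x h) =
  if excluded_middle_informative (lt x (stageN n))
  then pairK (natK 1) (round_code (histN n x))
  else pairK (natK 0) (phase_code (phaseN n)).
Proof. reflexivity. Qed.

Lemma node_code_inj : injective node_code.
Proof.
  intros n1 n2 E.
  assert (EA : forall x h1 h2,
             projT2 (node_code n1) (exist _ x h1) = projT2 (node_code n2) (exist _ x h2))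
    by exact (existT_fun_agree _ _ _ _ E).
  assert (Hs : forall n, lt (stageN n) (succK (stageN n))) by (intros; apply (succK_spec Hreg)).
  assert (Ep : stageN n1 = stageN n2).
  { destruct (lt_total Hreg (stageN n1) (stageN n2)) as [h|[h|h]]; auto; exfalso.
    - specialize (EA _ (Hs n1) (lt_trans Hreg _ _ _ h (Hs n2))).
      rewrite !node_code_entry in EA.
      destruct (excluded_middle_informative (lt (stageN n1) (stageN n1))) as [c|_];
        [exact (lt_irrefl Hreg _ c)|].
      destruct (excluded_middle_informative (lt (stageN n1) (stageN n2))) as [_|c]; [|tauto].
      apply (pairK_inj Hreg) in EA. exact (natK_neq Hreg 0 1 ltac:(lia) (proj1 EA)).
    - specialize (EA _ (lt_trans Hreg _ _ _ h (Hs n1)) (Hs n2)).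
      rewrite !node_code_entry in EA.
      destruct (excluded_middle_informative (lt (stageN n2) (stageN n2))) as [c|_];
        [exact (lt_irrefl Hreg _ c)|].
      destruct (excluded_middle_informative (lt (stageN n2) (stageN n1))) as [_|c]; [|tauto].
      apply (pairK_inj Hreg) in EA. exact (natK_neq Hreg 1 0 ltac:(lia) (proj1 EA)). }
  apply node_eq, pos_eq; auto.
  - apply hist_ext; auto. intros x hx.
    assert (hx2 : lt x (stageN n2)) by (rewrite <- Ep; exact hx).
    specialize (EA x (lt_trans Hreg _ _ _ hx (Hs n1)) (lt_trans Hreg _ _ _ hx2 (Hs n2))).
    rewrite !node_code_entry in EA.
    destruct (excluded_middle_informative (lt x (stageN n1))) as [_|c]; [|tauto].
    destruct (excluded_middle_informative (lt x (stageN n2))) as [_|c]; [|tauto].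
    apply (pairK_inj Hreg) in EA. apply round_code_inj. tauto.
  - specialize (EA _ (Hs n1) (eq_ind _ (fun p => lt p (succK (stageN n2))) (Hs n2) _ (eq_sym Ep))).
    rewrite !node_code_entry in EA.
    destruct (excluded_middle_informative (lt (stageN n1) (stageN n1))) as [c|_];
      [destruct (lt_irrefl Hreg _ c)|].
    destruct (excluded_middle_informative (lt (stageN n1) (stageN n2))) as [c|_];
      [rewrite <- Ep in c; destruct (lt_irrefl Hreg _ c)|].
    apply (pairK_inj Hreg) in EA. apply phase_code_inj. tauto.
Qed.

(* With bounded stages, an increasing [K]-sequence of nodes would inject [K] into
   [B * B], via the stage and the phase rank. *)
Lemma no_branch : ~ exists f : K -> Node, forall a b, lt a b -> node_lt (f a) (f b).
Proof.
  intros [f Hf].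
  assert (HG : chain (fun n => exists a, f a = n)).
  { intros n1 n2 [a <-] [b <-]. destruct (lt_total Hreg a b) as [h|[<-|h]].
    - left; right; auto.
    - left; left; auto.
    - right; right; auto. }
  destruct (chain_stage_sup _ HG) as [q [Hq _]].
  destruct (exists_gt3 Hreg q (natK 0) (natK 1)) as (B1 & g1 & g2 & g3).
  destruct (exists_gt3 Hreg B1 (natK 2) (natK 2)) as (B & g4 & g5 & _).
  assert (HrB : forall a, lt (natK (phase_rank (phaseN (f a)))) B).
  { intros a. destruct (phaseN (f a)); simpl; auto; eapply (lt_trans Hreg); eauto. }
  assert (HpB : forall a, lt (stageN (f a)) B).
  { intros a. eapply (le_lt_trans Hreg); [apply Hq; eauto|]. eapply (lt_trans Hreg); eauto. }
  apply (no_inj_K_square Hreg B).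
  exists (fun a => (exist (fun c => lt c B) (stageN (f a)) (HpB a),
                    exist (fun c => lt c B) (natK (phase_rank (phaseN (f a)))) (HrB a))).
  intros a b E. injection E; intros E2 E1. apply (natK_inj Hreg) in E2.
  destruct (lt_total Hreg a b) as [h|[h|h]]; auto; exfalso;
    apply Hf, pos_lt_measure in h;
      fold (stageN (f a)) (stageN (f b)) (phaseN (f a)) (phaseN (f b)) in h;
    destruct h as [h|[_ h]]; try lia; rewrite E1 in h; exact (lt_irrefl Hreg _ h).
Qed.

Lemma increasing_has_sup : forall (a : K) (f : {b : K | lt b a} -> Node),
  (forall x y, lt (proj1_sig x) (proj1_sig y) -> node_lt (f x) (f y)) ->
  exists s, (forall x, node_le (f x) s) /\ (forall u, (forall x, node_le (f x) u) -> node_le s u).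
Proof.
  intros a f Hf. set (G := fun n => exists x, f x = n).
  assert (HG : chain G).
  { intros n1 n2 [x <-] [y <-]. destruct (lt_total Hreg (proj1_sig x) (proj1_sig y)) as [h|[h|h]].
    - left; right; auto.
    - apply proj1_sig_inj in h; subst; left; left; auto.
    - right; right; auto. }
  destruct (chain_sup G HG) as [(n & [x0 <-] & h)|(t & Hsup & Hbelow & Hhist & Hstart)].
  - exists (f x0); split; [intros x; apply h; exists x; auto|]. intros u Hu; apply Hu.
  - exists t; split.
    + intros x; right; apply (limit_above G); auto. exists x; auto.
    + intros u Hu; apply (limit_least G); auto. intros n [x <-]; auto.
Qed.

Lemma good_game_tree : good_tree lt node_lt root label_of (KltK lt).
Proof.
  split; [exact node_lt_irrefl|]. split; [exact node_lt_trans|]. split; [exact root_le|].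
  split; [exact pred_comparable|]. split; [exact node_lt_wf|]. split; [exact no_branch|].
  split; [exact imm_succ_card|]. split; [exists node_code; exact node_code_inj|].
  split; [exact increasing_has_sup|]. split.
  - intros t Hl. destruct (leaf_or_succ t) as [(U & _ & _ & h)|(h & _)]; [tauto|auto].
  - exact leaf_label.
Qed.

Lemma leaf_holds_Answer (n : Node) xi : leaf_holds xi (label_of n) ->
  exists g w, phaseN n = Answer g w /\ xi g = w /\ (lt g (stageN n) -> w = round_a (histN n g)).
Proof.
  unfold label_of. destruct (phaseN n) as [| | |g w]; simpl; try tauto; [|eauto].
  destruct (excluded_middle_informative _); [destruct (excluded_middle_informative _)|];
    simpl; tauto.
Qed.

Definition mk_node (t : pos) (default : Node) : Node :=
  match excluded_middle_informative (valid t) with left H => exist _ t H | right _ => default end.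
Lemma mk_node_val t n : valid t -> proj1_sig (mk_node t n) = t.
Proof. intros H; unfold mk_node; destruct (excluded_middle_informative (valid t)); tauto. Qed.

Definition strategy (a b c : Baire) (n : Node) : Node :=
  match phaseN n with
  | Start =>
      mk_node (mkpos (stageN n) (histN n) (Moved (a (stageN n), b (stageN n), c (stageN n)))) n
  | Challenge g => mk_node (mkpos (stageN n) (histN n) (Answer g (a g))) n
  | _ => n
  end.

Lemma imm_succ_of_Start (n s : Node) : phaseN n = Start ->
  aliveII (histN n) (stageN n) -> aliveI (histN n) (stageN n) -> imm_succ node_lt n s ->
  exists m, proj1_sig s = mkpos (stageN n) (histN n) (Moved m).
Proof.
  intros E hT hS [H Hn].
  destruct H as [(h1 & h2 & h3)|(h1 & h2 & h3)];
    fold (stageN n) (stageN s) (histN n) (histN s) (phaseN n) (phaseN s) in *.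
  - exfalso.
    assert (Vu : valid (mkpos (stageN n) (histN n) (Moved (fst (histN s (stageN n))))))
      by (apply valid_same_stage; auto).
    apply Hn. exists (exist _ _ Vu). split.
    + right; simpl; split; auto; split; auto. fold (phaseN n); rewrite E; exact I.
    + left; simpl; split; auto.
  - pose proof (valid_phase s) as V3. rewrite E in h3.
    destruct (phaseN s) eqn:Es; simpl in h3; try tauto.
    + exists m. apply pos_eq; simpl; auto.
    + exfalso; rewrite <- h1, <- h2 in V3; tauto.
    + exfalso; rewrite <- h1, <- h2 in V3; tauto.
Qed.

Lemma succ_of_Challenge (n s : Node) g : phaseN n = Challenge g -> node_lt n s ->
  exists w, proj1_sig s = mkpos (stageN n) (histN n) (Answer g w).
Proof.
  intros E H. destruct H as [(h1 & h2 & h3)|(h1 & h2 & h3)];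
    fold (stageN n) (stageN s) (histN n) (histN s) (phaseN n) (phaseN s) in *;
    rewrite E in h3; simpl in h3; [tauto|].
  destruct (phaseN s) eqn:Es; simpl in h3; try tauto. subst. exists w. apply pos_eq; simpl; auto.
Qed.

Lemma strategy_is_II a b c : strategyII node_lt label_of (strategy a b c).
Proof.
  intros n HL. destruct (label_union n HL) as [(E & hT & hS)|[g E]]; unfold strategy; rewrite E.
  - assert (V : valid (mkpos (stageN n) (histN n)
                         (Moved (a (stageN n), b (stageN n), c (stageN n)))))
      by (apply valid_same_stage; auto).
    apply imm_succ_same_stage; unfold stageN, histN, phaseN; rewrite mk_node_val; auto;
      fold (phaseN n); rewrite E; simpl; auto.
    intros ph h1 h2; destruct ph; simpl in *; tauto.
  - pose proof (valid_phase n) as V3. rewrite E in V3.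
    assert (V : valid (mkpos (stageN n) (histN n) (Answer g (a g))))
      by (apply valid_same_stage; auto).
    apply imm_succ_same_stage; unfold stageN, histN, phaseN; rewrite mk_node_val; auto;
      fold (phaseN n); rewrite E; simpl; auto.
    intros ph h1 h2; destruct ph; simpl in *; tauto.
Qed.

Lemma label_restr (n : Node) x hx : label_of (node_restr n x hx) = LUnion.
Proof.
  destruct (pos_restr_alive _ _ (proj2_sig n) hx). apply label_Start_union; auto.
Qed.

Lemma consistent_strategy a b c (n : Node) : consistent node_lt label_of (strategy a b c) n ->
  (forall x, lt x (stageN n) -> fst (histN n x) = (a x, b x, c x)) /\
  (forall g w, phaseN n = Answer g w -> w = a g).
Proof.
  intros Hc. split.
  - intros x hx. set (r := node_restr n x hx).
    assert (Hr : node_le (strategy a b c r) n)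
      by (apply Hc; [apply pos_restr_lt; auto|apply label_restr]).
    destruct (pos_restr_alive _ _ (proj2_sig n) hx) as [hT hS].
    assert (V : valid (mkpos x (histN r) (Moved (a x, b x, c x)))).
    { split; [|split]; simpl; auto; apply (proj2_sig r). }
    assert (E : proj1_sig (strategy a b c r) = mkpos x (histN r) (Moved (a x, b x, c x)))
      by (apply mk_node_val; auto).
    apply node_le_phase_compat in Hr; unfold stageN, phaseN in *; rewrite E in *; simpl in *; auto.
  - intros g w E. pose proof (valid_phase n) as V3. rewrite E in V3.
    assert (Vr : valid (mkpos (stageN n) (histN n) (Challenge g)))
      by (apply valid_same_stage; auto).
    set (r := exist _ _ Vr : Node).
    assert (Hr : node_le (strategy a b c r) n).
    { apply Hc; [|reflexivity]. right; simpl; split; auto; split; auto.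
      fold (phaseN n); rewrite E; simpl; auto. }
    assert (V : valid (mkpos (stageN n) (histN n) (Answer g (a g))))
      by (apply valid_same_stage; auto).
    assert (E2 : proj1_sig (strategy a b c r) = mkpos (stageN n) (histN n) (Answer g (a g)))
      by (apply mk_node_val; auto).
    destruct Hr as [Hr|[(h1 & _)|(_ & _ & h3)]].
    + apply (f_equal phaseN) in Hr. unfold phaseN at 1 in Hr. rewrite E2, E in Hr.
      simpl in Hr; congruence.
    + rewrite E2 in h1; simpl in h1; destruct (lt_irrefl Hreg _ h1).
    + rewrite E2 in h3; simpl in h3; tauto.
Qed.

Lemma strategy_wins a b c : C1 a b c -> winningII node_lt label_of a (strategy a b c).
Proof.
  intros HC. split; [apply strategy_is_II|]. intros n Hl Hc.
  destruct (consistent_strategy a b c n Hc) as [D1 D2].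
  destruct (leaf_label n Hl) as [U [EU _]]. rewrite EU. simpl.
  unfold label_of in EU. destruct (phaseN n) eqn:Eph; try discriminate.
  - destruct (excluded_middle_informative (aliveII (histN n) (stageN n))) as [h|h].
    + destruct (excluded_middle_informative _); discriminate.
    + exfalso; apply h. exists a, b, c; split; auto.
  - injection EU; intros <-. split; [symmetry; apply D2; auto|].
    intros hg. rewrite (D2 g w eq_refl). unfold round_a. rewrite D1; auto.
Qed.

(** * Plays against a strategy of II *)

Section Play.
Variable sigma : Node -> Node.
Hypothesis Hsigma : strategyII node_lt label_of sigma.
Variable movesI : K -> K * K.
Variable challenge : K -> (K -> Round) -> K.

Definition follows_I (n : Node) : Prop :=
  (forall x, lt x (stageN n) -> snd (histN n x) = movesI x) /\
  match phaseN n with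
  | Challenge g | Answer g _ => g = challenge (stageN n) (histN n)
  | _ => True
  end.

Definition on_play (n : Node) : Prop := consistent node_lt label_of sigma n /\ follows_I n.

Lemma on_play_hist x n1 n2 : on_play n1 -> on_play n2 ->
  lt x (stageN n1) -> lt x (stageN n2) -> histN n1 x = histN n2 x.
Proof.
  revert n1 n2; induction x as [x IH] using (well_founded_ind (lt_wf Hreg)).
  intros n1 n2 [c1 i1] [c2 i2] h1 h2.
  assert (Er : node_restr n1 x h1 = node_restr n2 x h2).
  { apply node_eq, pos_eq; simpl; auto. apply functional_extensionality; intros z.
    destruct (excluded_middle_informative (lt z x)) as [hz|]; auto.
    apply IH; [exact hz|split; auto|split; auto| |]; eapply (lt_trans Hreg); eauto. }
  set (r := node_restr n1 x h1).
  assert (R1 : node_le (sigma r) n1) by (apply c1; [apply pos_restr_lt; auto|apply label_restr]).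
  assert (R2 : node_le (sigma r) n2)
    by (unfold r; rewrite Er; apply c2; [apply pos_restr_lt; auto|apply label_restr]).
  destruct (pos_restr_alive _ _ (proj2_sig n1) h1) as [hT hS].
  destruct (imm_succ_of_Start r (sigma r) eq_refl hT hS (Hsigma r (label_restr n1 x h1)))
    as [m Em].
  change (stageN r) with x in Em.
  apply node_le_phase_compat in R1; [|unfold stageN; rewrite Em; auto].
  apply node_le_phase_compat in R2; [|unfold stageN; rewrite Em; auto].
  unfold phaseN, stageN in R1, R2; rewrite Em in R1, R2; simpl in R1, R2.
  rewrite (surjective_pairing (histN n1 x)), (surjective_pairing (histN n2 x)).
  f_equal; [congruence|]. rewrite (proj1 i1), (proj1 i2); auto.
Qed.

Lemma on_play_Moved (n b : Node) m : on_play n -> phaseN n = Moved m ->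
  proj1_sig b = mkpos (stageN n) (histN n) Start ->
  label_of b = LUnion /\ node_lt b n /\ proj1_sig (sigma b) = mkpos (stageN n) (histN n) (Moved m).
Proof.
  intros [c _] E Eb. pose proof (valid_phase n) as V3. rewrite E in V3.
  assert (Ep : stageN b = stageN n) by (unfold stageN; rewrite Eb; auto).
  assert (Ed : histN b = histN n) by (unfold histN; rewrite Eb; auto).
  assert (Eb2 : phaseN b = Start) by (unfold phaseN; rewrite Eb; auto).
  assert (Lb : label_of b = LUnion) by (apply label_Start_union; rewrite ?Ep, ?Ed; tauto).
  assert (Hlt : node_lt b n)
    by (right; rewrite Eb; simpl; split; auto; split; auto; fold (phaseN n); rewrite E; exact I).
  split; auto; split; auto.
  assert (hT : aliveII (histN b) (stageN b)) by (rewrite Ep, Ed; tauto).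
  assert (hS : aliveI (histN b) (stageN b)) by (rewrite Ep, Ed; tauto).
  destruct (imm_succ_of_Start b (sigma b) Eb2 hT hS (Hsigma b Lb)) as [m' Em'].
  rewrite Ep, Ed in Em'. rewrite Em'.
  destruct (c b Hlt Lb) as [Hb|[(h1 & _)|(_ & _ & h3)]].
  - rewrite Hb in Em'.
    assert (E3 : phaseN n = Moved m') by (unfold phaseN; rewrite Em'; reflexivity).
    rewrite E in E3. injection E3 as ->. reflexivity.
  - rewrite Em' in h1; simpl in h1; destruct (lt_irrefl Hreg _ h1).
  - rewrite Em' in h3; simpl in h3; tauto.
Qed.

Lemma on_play_Answer (n b : Node) g w : on_play n -> phaseN n = Answer g w ->
  proj1_sig b = mkpos (stageN n) (histN n) (Challenge g) ->
  proj1_sig (sigma b) = mkpos (stageN n) (histN n) (Answer g w).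
Proof.
  intros [c _] E Eb.
  assert (Lb : label_of b = LUnion) by (unfold label_of, phaseN; rewrite Eb; auto).
  assert (Hlt : node_lt b n)
    by (right; rewrite Eb; simpl; split; auto; split; auto; fold (phaseN n); rewrite E; simpl;
        auto).
  assert (Eb2 : phaseN b = Challenge g) by (unfold phaseN; rewrite Eb; auto).
  destruct (succ_of_Challenge b (sigma b) g Eb2 (proj1 (Hsigma b Lb))) as [w' Ew].
  assert (Ep : stageN b = stageN n) by (unfold stageN; rewrite Eb; auto).
  assert (Ed : histN b = histN n) by (unfold histN; rewrite Eb; auto).
  rewrite Ep, Ed in Ew. rewrite Ew.
  destruct (c b Hlt Lb) as [Hb|[(h1 & _)|(_ & _ & h3)]].
  - rewrite Hb in Ew.
    assert (E3 : phaseN n = Answer g w') by (unfold phaseN; rewrite Ew; reflexivity).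
    rewrite E in E3. injection E3 as ->. reflexivity.
  - rewrite Ew in h1; simpl in h1; destruct (lt_irrefl Hreg _ h1).
  - rewrite Ew in h3; simpl in h3; tauto.
Qed.

Lemma on_play_challenge (n : Node) g : on_play n ->
  (phaseN n = Challenge g \/ exists w, phaseN n = Answer g w) -> g = challenge (stageN n) (histN n).
Proof. intros [_ [_ i]] [E|[w E]]; rewrite E in i; auto. Qed.

Lemma on_play_stage_lt (n1 n2 : Node) : on_play n1 -> on_play n2 ->
  lt (stageN n1) (stageN n2) -> node_le n1 n2.
Proof.
  intros g1 g2 hl.
  assert (Eh : forall x, lt x (stageN n1) -> histN n1 x = histN n2 x)
    by (intros x hx; apply on_play_hist; auto; eapply (lt_trans Hreg); eauto).
  right; left. split; auto. split; [exact Eh|].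
  change (phase_compat (phaseN n1) (histN n2 (stageN n1))).
  pose proof (valid_phase n1) as V3. destruct (phaseN n1) eqn:E; simpl; auto.
  - assert (V : valid (mkpos (stageN n1) (histN n1) Start)) by (apply valid_same_stage; exact I).
    set (b := exist _ _ V : Node).
    destruct (on_play_Moved n1 b m g1 E eq_refl) as (Lb & _ & EV).
    assert (Hb : node_le (sigma b) n2) by (apply (proj1 g2); auto; left; simpl; split; auto).
    assert (Hp : lt (stageN (sigma b)) (stageN n2)) by (unfold stageN at 1; rewrite EV; exact hl).
    pose proof (node_le_phase_compat _ _ Hb Hp) as Q.
    unfold phaseN, stageN at 1 in Q; rewrite EV in Q; exact Q.
  - exfalso; apply (proj2 V3), (alive_below n1 n2); auto.
  - exfalso; apply (proj2 V3), (alive_below n1 n2); auto.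
Qed.

Lemma on_play_phases_comparable (n1 n2 : Node) : on_play n1 -> on_play n2 ->
  stageN n1 = stageN n2 -> histN n1 = histN n2 ->
  phase_lt (phaseN n1) (phaseN n2) \/ phaseN n1 = phaseN n2 \/ phase_lt (phaseN n2) (phaseN n1).
Proof.
  intros g1 g2 hp hd.
  pose proof (valid_phase n1) as V1. pose proof (valid_phase n2) as V2. rewrite <- hp, <- hd in V2.
  assert (Hm : forall m m', phaseN n1 = Moved m -> phaseN n2 = Moved m' -> m = m').
  { intros m m' E1 E2.
    assert (Vb : valid (mkpos (stageN n1) (histN n1) Start)) by (apply valid_same_stage; exact I).
    destruct (on_play_Moved n1 (exist _ _ Vb) m g1 E1 eq_refl) as (_ & _ & Q1).
    destruct (on_play_Moved n2 (exist _ _ Vb) m' g2 E2) as (_ & _ & Q2); [simpl; congruence|].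
    rewrite Q1 in Q2. congruence. }
  assert (Hg : forall g g', (phaseN n1 = Challenge g \/ exists w, phaseN n1 = Answer g w) ->
                 (phaseN n2 = Challenge g' \/ exists w, phaseN n2 = Answer g' w) -> g = g').
  { intros g g' E1 E2. rewrite (on_play_challenge n1 g g1 E1), (on_play_challenge n2 g' g2 E2).
    congruence. }
  assert (Hw : forall g w w', phaseN n1 = Answer g w -> phaseN n2 = Answer g w' -> w = w').
  { intros g w w' E1 E2. rewrite E1 in V1.
    assert (Vb : valid (mkpos (stageN n1) (histN n1) (Challenge g)))
      by (apply valid_same_stage; auto).
    pose proof (on_play_Answer n1 (exist _ _ Vb) g w g1 E1 eq_refl) as Q1.
    pose proof (on_play_Answer n2 (exist _ _ Vb) g w' g2 E2 ltac:(simpl; congruence)) as Q2.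
    rewrite Q1 in Q2. congruence. }
  destruct (phaseN n1) eqn:E1, (phaseN n2) eqn:E2; simpl; auto; try tauto;
    first [ rewrite (Hm _ _ eq_refl eq_refl); auto
          | rewrite (Hg _ _ (or_introl eq_refl) (or_introl eq_refl)); auto
          | rewrite (Hg _ _ (or_introl eq_refl) (or_intror (ex_intro _ _ eq_refl))); auto
          | rewrite (Hg _ _ (or_intror (ex_intro _ _ eq_refl)) (or_introl eq_refl)); auto
          | pose proof (Hg _ _ (or_intror (ex_intro _ _ eq_refl))
                             (or_intror (ex_intro _ _ eq_refl))) as <-;
            rewrite (Hw _ _ _ eq_refl eq_refl); auto ].
Qed.

Lemma on_play_chain : chain on_play.
Proof.
  intros n1 n2 g1 g2. destruct (lt_total Hreg (stageN n1) (stageN n2)) as [h|[h|h]].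
  - left; apply on_play_stage_lt; auto.
  - assert (hd : histN n1 = histN n2).
    { apply hist_ext; auto. intros x hx; apply on_play_hist; auto. rewrite <- h; auto. }
    destruct (node_same_stage_comparable n1 n2 h hd (on_play_phases_comparable n1 n2 g1 g2 h hd))
      as [H|[H|H]]; unfold node_le; auto.
  - right; apply on_play_stage_lt; auto.
Qed.

Lemma on_play_extend (n s : Node) : on_play n -> imm_succ node_lt n s ->
  (label_of n = LUnion -> sigma n = s) -> follows_I s -> on_play s.
Proof.
  intros [Hc _] [Hi Hn] Hs Hf. split; auto.
  intros u Hu HL. destruct (pred_comparable s u n Hu Hi) as [h|[<-|h]].
  - eapply node_le_trans; [apply Hc; auto|right; auto].
  - rewrite Hs; auto. left; auto.
  - exfalso; apply Hn; eauto.
Qed.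

Lemma on_play_succ_Start (n : Node) : on_play n -> phaseN n = Start ->
  aliveII (histN n) (stageN n) -> exists n', on_play n' /\ node_lt n n'.
Proof.
  intros Hp E hT. destruct (classic (aliveI (histN n) (stageN n))) as [hS|hS].
  - pose proof (Hsigma n (label_Start_union n E hT hS)) as Hi.
    destruct (imm_succ_of_Start n (sigma n) E hT hS Hi) as [m Em].
    exists (sigma n); split; [|apply Hi].
    apply (on_play_extend n); auto.
    unfold follows_I, stageN, histN, phaseN; rewrite Em; simpl.
    split; [apply (proj1 (proj2 Hp))|exact I].
  - assert (Vs : valid (mkpos (stageN n) (histN n) (Challenge (challenge (stageN n) (histN n)))))
      by (apply valid_same_stage; auto).
    assert (Hi : imm_succ node_lt n (exist _ _ Vs)).
    { apply imm_succ_same_stage; auto; unfold phaseN; simpl; fold (phaseN n); rewrite E;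
        simpl; auto.
      intros ph h1 h2; destruct ph; simpl in *; tauto. }
    exists (exist _ _ Vs); split; [|apply Hi].
    apply (on_play_extend n); auto.
    + rewrite (label_Start_inter n E hT hS); discriminate.
    + split; [apply (proj1 (proj2 Hp))|reflexivity].
Qed.

Lemma on_play_succ (n : Node) : on_play n -> ~ leaf node_lt n ->
  exists n', on_play n' /\ node_lt n n'.
Proof.
  intros Hp Hl. pose proof (proj2 Hp) as [i1 i2].
  destruct (phaseN n) eqn:E.
  - apply on_play_succ_Start; auto. apply NNPP; intros hT.
    exact (Hl (label_leaf n _ (label_Start_dead n E hT))).
  - pose proof (pos_next_valid (proj1_sig n) m (movesI (stageN n)) (proj2_sig n) E) as Vs.
    exists (exist _ _ Vs); split; [|apply pos_next_lt; auto].
    apply (on_play_extend n); auto.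
    + apply imm_succ_next; auto.
    + unfold label_of; rewrite E; discriminate.
    + split; [|exact I]. intros x hx. unfold histN, stageN in *; simpl in *.
      apply (lt_succK Hreg) in hx.
      destruct (excluded_middle_informative (lt x (stage (proj1_sig n)))) as [h|h];
        [apply i1; auto|].
      destruct (excluded_middle_informative (x = stage (proj1_sig n))) as [->|h']; [reflexivity|].
      destruct hx; tauto.
  - assert (Lu : label_of n = LUnion) by (unfold label_of; rewrite E; auto).
    pose proof (Hsigma n Lu) as Hi.
    destruct (succ_of_Challenge n (sigma n) g E (proj1 Hi)) as [w Ew].
    exists (sigma n); split; [|apply Hi].
    apply (on_play_extend n); auto.
    unfold follows_I, stageN, histN, phaseN; rewrite Ew; simpl.
    split; auto.
  - exfalso; apply Hl. eapply label_leaf. unfold label_of; rewrite E; reflexivity.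
Qed.

(* The nodes on the play form a chain; its supremum would again be on the play, so the
   chain has a maximum, which must be a leaf. *)
Lemma play_reaches_leaf :
  exists n, leaf node_lt n /\ consistent node_lt label_of sigma n /\ follows_I n.
Proof.
  apply NNPP; intros Hn.
  assert (HL : forall n, on_play n -> ~ leaf node_lt n) by (intros n [c i] l; apply Hn; eauto).
  destruct (chain_sup on_play on_play_chain)
    as [(n0 & g0 & hmax)|(t & Hsup & Hbelow & Hhist & Hstart)].
  - destruct (on_play_succ n0 g0 (HL n0 g0)) as [n' [g' hl]].
    apply (node_lt_irrefl n0). eapply node_lt_le_trans; eauto.
  - assert (Gt : on_play t).
    { split; [|split].
      - intros s hs HLs. destruct (limit_preds on_play t Hsup Hhist Hstart s hs) as [n [gn hn]].
        eapply node_le_trans; [apply (proj1 gn); auto|right].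
        exact (limit_above on_play t on_play_chain Hsup Hbelow Hhist n gn).
      - intros x hx. destruct (stage_sup_cofinal on_play _ Hsup x hx) as [n [gn hxn]].
        rewrite (Hhist n); auto. apply (proj2 gn); auto.
      - rewrite Hstart; exact I. }
    destruct (on_play_succ t Gt (HL t Gt)) as [n' [g' hl]].
    apply (node_lt_irrefl t). apply (node_lt_trans _ n'); [exact hl|].
    exact (limit_above on_play t on_play_chain Hsup Hbelow Hhist n' g').
Qed.

End Play.

(* I plays the [C2]-witness; when forced to challenge, I picks a coordinate where II's first
   coordinate deviates from [xi], which exists as [(xi, b', c')] would keep I alive. *)
Lemma II_loses_on_C2 xi b' c' : C2 xi b' c' -> ~ II_wins node_lt label_of xi.
Proof.
  intros H2 [sg [Hs Hw]].
  set (challenge := fun (p : K) (d : K -> Round) =>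
                      epsilon (K_inhabited Hreg) (fun g => lt g p /\ round_a (d g) <> xi g)).
  destruct (play_reaches_leaf sg Hs (fun x => (b' x, c' x)) challenge) as (n & hl & hc & [i1 i2]).
  destruct (leaf_holds_Answer n xi (Hw n hl hc)) as (g & w & E & h1 & h2).
  pose proof (valid_phase n) as V3. rewrite E in i2, V3.
  assert (Hex : exists g0, lt g0 (stageN n) /\ round_a (histN n g0) <> xi g0).
  { apply NNPP; intros Hn. apply (proj2 V3). exists xi, b', c'; split; auto. intros x hx. split.
    - apply NNPP; intros h; apply Hn; eauto.
    - rewrite i1; auto. }
  destruct (epsilon_spec (K_inhabited Hreg) _ Hex) as [g1 g2].
  fold (challenge (stageN n) (histN n)) in g1, g2. rewrite <- i2 in g1, g2.
  apply g2. rewrite h1. symmetry; apply h2; auto.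
Qed.

Hypothesis Hcov : forall xi, (exists b c, C1 xi b c) \/ (exists b c, C2 xi b c).

Lemma II_wins_iff xi : (exists b c, C1 xi b c) <-> II_wins node_lt label_of xi.
Proof.
  split.
  - intros (b & c & H). exists (strategy xi b c). apply strategy_wins; auto.
  - intros H. destruct (Hcov xi) as [|(b' & c' & H2)]; auto.
    exfalso; exact (II_loses_on_C2 xi b' c' H2 H).
Qed.

(** * Coding strategies by points *)

Definition coord (i : nat) (eta : Baire) : Baire := fun x => eta (pairK (natK i) x).
Definition code_dom (eta : Baire) : Prop := C1 (coord 0 eta) (coord 1 eta) (coord 2 eta).
Definition code_strategy (eta : Baire) : Node -> Node :=
  strategy (coord 0 eta) (coord 1 eta) (coord 2 eta).

(* Otherwise I challenges at a coordinate where [xi] differs from the coded point, and II's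
   answer there is the coded value. *)
Lemma code_winning_iff xi eta : code_dom eta ->
  (winningII node_lt label_of xi (code_strategy eta) <-> xi = coord 0 eta).
Proof.
  intros HD. split; [|intros ->; apply strategy_wins; auto].
  intros [Hs Hw]. apply functional_extensionality; intros g0. apply NNPP; intros hg0.
  destruct (play_reaches_leaf (code_strategy eta) Hs (fun _ => (k0, k0)) (fun _ _ => g0))
    as (n & hl & hc & [_ i2]).
  destruct (leaf_holds_Answer n xi (Hw n hl hc)) as (g & w & E & h1 & _).
  rewrite E in i2; subst g.
  apply hg0. rewrite h1. apply (proj2 (consistent_strategy _ _ _ n hc)); auto.
Qed.

Lemma code_dom_compl : exists F : K -> (Baire -> Prop),
  (forall k, basic1 (F k)) /\ forall eta, ~ code_dom eta <-> exists k, F k eta.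
Proof.
  destruct HC1 as (F & hF & E).
  exists (fun k eta => F k (coord 0 eta) (coord 1 eta) (coord 2 eta)). split.
  - intros k. destruct (hF k) as (U & V & W & hU & hV & hW & EF).
    pose proof (fun i => pairK_inj_r Hreg (natK i)) as Hinj.
    eapply basic1_ext;
      [apply (basic1_inter Hreg);
         [apply (basic1_reindex Hreg _ _ (Hinj 0) hU)
         |apply (basic1_inter Hreg);
            [apply (basic1_reindex Hreg _ _ (Hinj 1) hV)
            |apply (basic1_reindex Hreg _ _ (Hinj 2) hW)]]|].
    intros z. rewrite EF. unfold coord. tauto.
  - intros eta. apply E.
Qed.

Lemma code_dom_closed : kclosed1 code_dom.
Proof.
  destruct code_dom_compl as (F & hF & E). exists K, F. split; [apply card_le_refl|]. split; auto.
Qed.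

Lemma code_dom_borel : @kBorel K _ basic2 (fun p : Baire * Baire => code_dom (snd p)).
Proof.
  destruct code_dom_compl as (F & hF & E).
  eapply kB_ext; [apply kB_compl, (@kB_union K _ basic2 K (fun k p => F k (snd p)));
                  [apply card_le_refl|]|].
  - intros k. apply kB_basic. exists (fun _ => True), (F k).
    split; [apply (basic1_full Hreg)|split; auto]. intros; simpl; tauto.
  - intros p. simpl. rewrite <- E. split; [apply NNPP|tauto].
Qed.

Lemma coord0_graph_borel : @kBorel K _ basic2 (fun p : Baire * Baire => fst p = coord 0 (snd p)).
Proof.
  eapply kB_ext;
    [apply (@kB_inter K _ basic2 K
              (fun x p => exists v, fst p x = v /\ snd p (pairK (natK 0) x) = v));
     [apply card_le_refl|]|].
  - intros x.
    apply (@kB_union K _ basic2 K (fun v p => fst p x = v /\ snd p (pairK (natK 0) x) = v));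
      [apply card_le_refl|].
    intros v. apply kB_basic. exists (fun z => z x = v), (fun z => z (pairK (natK 0) x) = v).
    split; [apply (basic1_point Hreg)|split; [apply (basic1_point Hreg)|]]. intros; tauto.
  - intros p. split.
    + intros H. apply functional_extensionality; intros x.
      destruct (H x) as [v [h1 h2]]. unfold coord. congruence.
    + intros H x. exists (fst p x); split; auto. rewrite H; auto.
Qed.

Lemma code_winning_borel : @kBorel K _ basic2
  (fun p : Baire * Baire =>
     code_dom (snd p) /\ winningII node_lt label_of (fst p) (code_strategy (snd p))).
Proof.
  eapply kB_ext;
    [apply (@kB_inter K _ basic2 bool
              (fun i p => if i then code_dom (snd p) else fst p = coord 0 (snd p)));
     [apply (card_le_bool Hreg)|intros [|]; [apply code_dom_borel|apply coord0_graph_borel]]|].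
  intros p. split.
  - intros H. pose proof (H true) as H1; pose proof (H false) as H2; simpl in *.
    split; auto. apply code_winning_iff; auto.
  - intros [H1 H2] [|]; auto. apply code_winning_iff; auto.
Qed.

Lemma exists_coords (a b c : Baire) :
  exists eta, coord 0 eta = a /\ coord 1 eta = b /\ coord 2 eta = c.
Proof.
  destruct (exists_pairK_extension Hreg (fun k x => if excluded_middle_informative (k = natK 0) then a x
                                      else if excluded_middle_informative (k = natK 1) then b x
                                      else c x)) as [eta Heta].
  assert (N10 : natK 1 <> natK 0) by (apply (natK_neq Hreg); lia).
  assert (N20 : natK 2 <> natK 0) by (apply (natK_neq Hreg); lia).
  assert (N21 : natK 2 <> natK 1) by (apply (natK_neq Hreg); lia).
  exists eta; unfold coord; split; [|split]; apply functional_extensionality;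
    intros x; rewrite Heta;
    repeat destruct (excluded_middle_informative _); congruence.
Qed.

Lemma code_complete xi : II_wins node_lt label_of xi ->
  exists eta, code_dom eta /\ winningII node_lt label_of xi (code_strategy eta).
Proof.
  intros H. apply II_wins_iff in H. destruct H as (b & c & H).
  destruct (exists_coords xi b c) as (eta & E0 & E1 & E2).
  exists eta. unfold code_dom, code_strategy. rewrite E0, E1, E2. split; auto.
  apply strategy_wins; auto.
Qed.

Lemma game_borel_star_code : borel_star_code lt node_lt root label_of (KltK lt).
Proof.
  split; [apply good_game_tree|]. exists code_dom, code_strategy.
  split; [apply code_dom_closed|]. split; [intros; apply strategy_is_II|].
  split; [apply code_complete|]. apply code_winning_borel.
Qed.

End GameTree.

Lemma borel_star_of_closed_proj {K : Type} {lt : K -> K -> Prop} (Hreg : regular_cardinal lt)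
  (X : @Baire K -> Prop) C1 C2 : closed3 C1 -> closed3 C2 ->
  (forall a, X a <-> exists b c, C1 a b c) -> (forall a, ~ X a <-> exists b c, C2 a b c) ->
  borel_star lt (KltK lt) X.
Proof.
  intros HC1 HC2 E1 E2.
  assert (Hdisj : forall a b c b' c', C1 a b c -> C2 a b' c' -> False)
    by (intros a b c b' c' h1 h2; apply (proj2 (E2 a)); [eauto|apply E1; eauto]).
  assert (Hcov : forall xi, (exists b c, C1 xi b c) \/ (exists b c, C2 xi b c))
    by (intros xi; destruct (classic (X xi)); [left; apply E1|right; apply E2]; auto).
  exists (Node Hreg C1 C2), (node_lt Hreg C1 C2), (root Hreg C1 C2), (label_of Hreg C1 C2).
  split; [apply game_borel_star_code; auto|].
  intros xi. rewrite E1. apply II_wins_iff; auto.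
Qed.

Theorem lemma3p15 (K : Type) (lt : K -> K -> Prop) :
  regular_cardinal lt ->
  forall X : @Baire K -> Prop,
    Delta11 X -> borel_star lt (KltK lt) X.
Proof.
  intros Hreg X [HS HP].
  destruct (Sigma11_closed_proj Hreg X HS) as (C1 & HC1 & E1).
  destruct (Sigma11_closed_proj Hreg _ HP) as (C2 & HC2 & E2).
  exact (borel_star_of_closed_proj Hreg X C1 C2 HC1 HC2 E1 E2).
Qed.
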